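(* Let $x_0\in\{a=0\}$ be an accumulation point of $A$, let $\lambda>\lambda_0$, let $f\in C^1(A)$ be a bounded solution of $a(x)f'+H(x,f)=\lambda$ in $A$, and let $u_{\lambda_0}$ be a Lipschitz viscosity solution of $a u''+H(x,u')=\lambda_0$ in $\mathbb R$. Then $\hat\lambda(x_0)\le\lambda_0$ and: (a) if $f\ge u'_{\lambda_0}$ on $A$, then $\lim_{x\to x_0,\,x\in A}f(x)=p^+_\lambda(x_0)>p^+_{\lambda_0}(x_0)\ge\hat p(x_0)$; (b) if $f\le u'_{\lambda_0}$ on $A$, then $\lim_{x\to x_0,\,x\in A}f(x)=p^-_\lambda(x_0)<p^-_{\lambda_0}(x_0)\le\hat p(x_0)$.
   Context: Deterministic setting: $a:\mathbb R\to[0,1]$ with $\sqrt a$ $\kappa$-Lipschitz and (A1$'$): $a\not\equiv0$ and every connected component of $A:=\{a>0\}$ is a bounded interval. $H\in\mathscr H_{sqc}(\alpha_0,\alpha_1,\gamma,\eta)$, $\gamma>2$, $\eta>0$: (H1) $\alpha_0|p|^\gamma-1/\alpha_0\le H(x,p)\le\alpha_1(|p|^\gamma+1)$, (H2) $|H(x,p)-H(x,q)|\le\alpha_1(|p|+|q|+1)^{\gamma-1}|p-q|$, (H3) $|H(x,p)-H(y,p)|\le\alpha_1(|p|^\gamma+1)|x-y|$, $H(x,\cdot)$ strictly quasiconvex with unique minimizer $\hat p(x)$, $H(x,p_1)-H(x,p_2)\ge\eta|p_1-p_2|$ for $p_1<p_2\le\hat p(x)$, $H(x,p_2)-H(x,p_1)\ge\eta|p_1-p_2|$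 for $p_2>p_1\ge\hat p(x)$. $\hat\lambda(x):=\min_pH(x,p)$; for $\lambda\ge\hat\lambda(x)$, $\{p:H(x,p)\le\lambda\}=[p^-_\lambda(x),p^+_\lambda(x)]$. $\lambda_0:=\inf\{\lambda:\ a u''+H(x,u')=\lambda$ admits a continuous viscosity supersolution on $\mathbb R\}$ (supersolution: $a\varphi''+H(x,\varphi')\le\lambda$ for $C^2$ $\varphi$ touching from below; subsolution: $\ge\lambda$ from above). Lipschitz viscosity solutions are $C^2$ on $A$, so $u'_{\lambda_0}$ is $C^1$ on $A$. *)

From Stdlib Require Import Reals Lra.
From Coquelicot Require Import Coquelicot.
Open Scope R_scope.

(* x^g for x >= 0 and real exponent g (with 0^g = 0 for g > 0). *)
Definition pw (x g : R) : R := if Rle_dec x 0 then 0 else Rpower x g.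

Definition a_assump (kappa : R) (a : R -> R) : Prop :=
  (forall x, 0 <= a x <= 1) /\
  (forall x y, Rabs (sqrt (a x) - sqrt (a y)) <= kappa * Rabs (x - y)).

(* The connected component of x in A = {a > 0}: all y such that the closed
   segment between x and y lies in A. *)
Definition in_component (a : R -> R) (x y : R) : Prop :=
  forall z, Rmin x y <= z <= Rmax x y -> 0 < a z.

(* (A1'): a is not identically 0 and every connected component of {a > 0}
   is a bounded interval (connected subsets of R are intervals). *)
Definition A1' (a : R -> R) : Prop :=
  (exists x, a x <> 0) /\
  (forall x, 0 < a x -> exists M, forall y, in_component a x y -> Rabs y <= M).

Definition strictly_quasiconvex (h : R -> R) : Prop :=
  forall p q t, p <> q -> 0 < t < 1 -> h (t * p + (1 - t) * q) < Rmax (h p) (h q).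

Definition H_sqc (alpha0 alpha1 gamma eta : R) (H : R -> R -> R)
  (phat : R -> R) : Prop :=
  0 < alpha0 /\ 0 < alpha1 /\ 2 < gamma /\ 0 < eta /\
  (forall x p, alpha0 * pw (Rabs p) gamma - / alpha0 <= H x p /\
               H x p <= alpha1 * (pw (Rabs p) gamma + 1)) /\
  (forall x p q, Rabs (H x p - H x q) <=
       alpha1 * pw (Rabs p + Rabs q + 1) (gamma - 1) * Rabs (p - q)) /\
  (forall x y p, Rabs (H x p - H y p) <=
       alpha1 * (pw (Rabs p) gamma + 1) * Rabs (x - y)) /\
  (forall x, strictly_quasiconvex (H x)) /\
  (forall x p, p <> phat x -> H x (phat x) < H x p) /\
  (forall x p1 p2, p1 < p2 <= phat x -> H x p1 - H x p2 >= eta * Rabs (p1 - p2)) /\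
  (forall x p1 p2, phat x <= p1 < p2 -> H x p2 - H x p1 >= eta * Rabs (p1 - p2)).

Definition lamhat (H : R -> R -> R) (x : R) : R :=
  real (Glb_Rbar (fun v => exists p, v = H x p)).

Definition pplus (H : R -> R -> R) (lam x : R) : R :=
  real (Lub_Rbar (fun p => H x p <= lam)).
Definition pminus (H : R -> R -> R) (lam x : R) : R :=
  real (Glb_Rbar (fun p => H x p <= lam)).

Definition C2 (phi : R -> R) : Prop :=
  (forall x, ex_derive phi x) /\
  (forall x, ex_derive (Derive phi) x) /\
  (forall x, continuous (Derive (Derive phi)) x).

Definition touches_below (phi u : R -> R) (x0 : R) : Prop :=
  phi x0 = u x0 /\ exists d, 0 < d /\ forall y, Rabs (y - x0) < d -> phi y <= u y.
Definition touches_above (phi u : R -> R) (x0 : R) : Prop :=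
  phi x0 = u x0 /\ exists d, 0 < d /\ forall y, Rabs (y - x0) < d -> u y <= phi y.

Definition visc_super (a : R -> R) (H : R -> R -> R) (lam : R) (u : R -> R) : Prop :=
  (forall x, continuous u x) /\
  forall phi x0, C2 phi -> touches_below phi u x0 ->
    a x0 * Derive (Derive phi) x0 + H x0 (Derive phi x0) <= lam.
Definition visc_sub (a : R -> R) (H : R -> R -> R) (lam : R) (u : R -> R) : Prop :=
  (forall x, continuous u x) /\
  forall phi x0, C2 phi -> touches_above phi u x0 ->
    a x0 * Derive (Derive phi) x0 + H x0 (Derive phi x0) >= lam.
Definition visc_sol a H lam u : Prop := visc_super a H lam u /\ visc_sub a H lam u.

Definition lambda0 (a : R -> R) (H : R -> R -> R) : Rbar :=
  Glb_Rbar (fun lam => exists u, visc_super a H lam u).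

Definition lipschitz (u : R -> R) : Prop :=
  exists L, forall x y, Rabs (u x - u y) <= L * Rabs (x - y).

Definition near_in_A (a : R -> R) (x0 : R) := within (fun y => 0 < a y) (locally x0).

(* Near a zero [x0] of [a], the Lipschitz bound on [sqrt a] gives [a x <= kappa^2 (x - x0)^2].
   Writing the equation as [a f' = lam - H(x, f)], wherever [H(x0, f)] stays a fixed amount
   away from [lam] the derivative [f'] is of size at least [1 / (x - x0)^2] on a whole
   interval of [A] of length comparable to [x - x0]; since [f] is bounded this is impossible
   close to [x0], so [f] is forced towards the level set [{H(x0, .) = lam}], i.e. towards
   [p^-_lam(x0)] or [p^+_lam(x0)].  The lower branch is excluded in case (a) because
   [f >= u'] and [u' >= p^-_mu(x0)] near [x0] for [lam0 < mu < lam]: at a point where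
   [u' < p^-_mu(x0)] a steep concave parabola touches [u] from below nearby, and the
   supersolution inequality there contradicts [H(x0, p) > mu].  Testing [u] from below with
   [-(x - x0)^2 / e] and letting [e -> 0] gives [lamhat(x0) <= lam0].  Case (b) is case (a)
   for the reflected data [x -> -x], [p -> -p].  The regularity of [u] on [A] needed to speak
   of [u'] comes from [u] being semiconcave and semiconvex there, since [a > 0]. *)

From Stdlib Require Import Reals Lra Classical.
From Coquelicot Require Import Coquelicot.
Open Scope R_scope.

Lemma ball_R x e y : ball x e y <-> Rabs (y - x) < e.
Proof. unfold ball; simpl; unfold AbsRing_ball, abs, minus, plus, opp; simpl. tauto. Qed.

Lemma Rle_plus_small (x y r : R) :
  0 < r -> (forall k, 0 < k -> k <= r -> x <= y + k) -> x <= y.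
Proof.
  intros Hr Hk. apply Rle_plus_epsilon. intros e He.
  assert (Hm : 0 < Rmin r e) by (apply Rmin_pos; lra).
  specialize (Hk _ Hm (Rmin_l _ _)). assert (Rmin r e <= e) by apply Rmin_r. lra.
Qed.

Lemma Rabs_sqr t : Rabs t * Rabs t = t ^ 2.
Proof. rewrite <- pow2_abs. ring. Qed.

Lemma Rabs_bounds x : - Rabs x <= x <= Rabs x.
Proof. apply Rabs_le_between. lra. Qed.

Lemma pw_nonneg b g : 0 <= pw b g.
Proof. unfold pw. destruct (Rle_dec b 0); [lra|]. unfold Rpower. left; apply exp_pos. Qed.

Lemma pw_mono b B g : 0 <= g -> b <= B -> pw b g <= pw B g.
Proof.
  intros Hg Hb. unfold pw. destruct (Rle_dec b 0); destruct (Rle_dec B 0).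
  - lra.
  - unfold Rpower; left; apply exp_pos.
  - lra.
  - apply Rle_Rpower_l; lra.
Qed.

Section Coefficient.
Variables (kappa : R) (a : R -> R).
Hypothesis Ha : a_assump kappa a.

Lemma a_nonneg x : 0 <= a x.
Proof. apply Ha. Qed.

Lemma a_lipschitz x y : Rabs (a x - a y) <= 2 * Rabs kappa * Rabs (x - y).
Proof.
  destruct Ha as [Hbnd Hlip]. specialize (Hlip x y).
  assert (Ex : a x = sqrt (a x) * sqrt (a x)) by (rewrite sqrt_sqrt; [lra| apply Hbnd]).
  assert (Ey : a y = sqrt (a y) * sqrt (a y)) by (rewrite sqrt_sqrt; [lra| apply Hbnd]).
  assert (Hx1 : sqrt (a x) <= 1) by (rewrite <- sqrt_1; apply sqrt_le_1_alt, Hbnd).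
  assert (Hy1 : sqrt (a y) <= 1) by (rewrite <- sqrt_1; apply sqrt_le_1_alt, Hbnd).
  assert (Hx0 := sqrt_pos (a x)). assert (Hy0 := sqrt_pos (a y)).
  replace (a x - a y) with ((sqrt (a x) - sqrt (a y)) * (sqrt (a x) + sqrt (a y))) by lra.
  rewrite Rabs_mult, (Rabs_right (sqrt (a x) + sqrt (a y))) by lra.
  assert (kappa * Rabs (x - y) <= Rabs kappa * Rabs (x - y))
    by (apply Rmult_le_compat_r; [apply Rabs_pos| apply RRle_abs]).
  assert (0 <= Rabs (sqrt (a x) - sqrt (a y))) by apply Rabs_pos.
  nra.
Qed.

Lemma a_le_sq_dist_zero x e : a e = 0 -> a x <= kappa ^ 2 * (x - e) ^ 2.
Proof.
  intros He. destruct Ha as [Hbnd Hlip]. specialize (Hlip x e).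
  rewrite He, sqrt_0, Rminus_0_r, Rabs_right in Hlip by apply Rle_ge, sqrt_pos.
  assert (Ex : a x = sqrt (a x) * sqrt (a x)) by (rewrite sqrt_sqrt; [lra| apply Hbnd]).
  assert (Hx0 := sqrt_pos (a x)).
  assert (sqrt (a x) * sqrt (a x) <= (kappa * Rabs (x - e)) * (kappa * Rabs (x - e)))
    by (apply Rmult_le_compat; lra).
  rewrite <- (Rabs_sqr (x - e)).
  replace (kappa ^ 2 * (Rabs (x - e) * Rabs (x - e)))
    with ((kappa * Rabs (x - e)) * (kappa * Rabs (x - e))) by ring.
  lra.
Qed.

Lemma a_ge_half x y : Rabs (x - y) <= a y / (2 * (2 * Rabs kappa + 1)) -> a y / 2 <= a x.
Proof.
  intros Hx. assert (Hk := Rabs_pos kappa). assert (Hay := a_nonneg y).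
  assert (Hl := a_lipschitz x y). apply Rabs_le_between in Hl.
  assert (2 * Rabs kappa * Rabs (x - y) <= a y / 2); [|lra].
  apply (Rmult_le_compat_l (2 * Rabs kappa)) in Hx; [|lra].
  assert (2 * Rabs kappa * (a y / (2 * (2 * Rabs kappa + 1))) <= a y / 2); [|lra].
  apply (Rmult_le_reg_r (2 * (2 * Rabs kappa + 1))); [lra|].
  replace (2 * Rabs kappa * (a y / (2 * (2 * Rabs kappa + 1))) * (2 * (2 * Rabs kappa + 1)))
    with (2 * Rabs kappa * a y) by (field; lra).
  nra.
Qed.

End Coefficient.

Section PositivityInterval.
Variables (a : R -> R) (C k2 : R).
Hypothesis Hnonneg : forall x, 0 <= a x.
Hypothesis Hlip : forall x z, Rabs (a x - a z) <= C * Rabs (x - z).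
Hypothesis Hquad : forall x e, a e = 0 -> a x <= k2 * (x - e) ^ 2.

Lemma first_zero_right y z0 : 0 < a y -> y <= z0 -> a z0 = 0 ->
  exists b, y < b /\ a b = 0 /\ forall x, y <= x < b -> 0 < a x.
Proof.
  intros Hy Hyz Hz0.
  set (T := fun t => y <= t <= z0 /\ forall z, y <= z <= t -> 0 < a z).
  assert (Tb : bound T) by (exists z0; intros t [Ht _]; lra).
  assert (Ty : T y) by (split; [lra| intros z Hz1; replace z with y by lra; auto]).
  destruct (completeness T Tb (ex_intro _ y Ty)) as [b [Hub Hlub]].
  assert (Hyb : y <= b) by (apply Hub; auto).
  assert (Hbz : b <= z0) by (apply Hlub; intros t [Ht _]; lra).
  assert (Hbelow : forall x, y <= x < b -> 0 < a x).
  { intros x Hx. destruct (classic (exists t, T t /\ x < t)) as [[t [[_ Tt] Hxt]]|Hn].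
    - apply Tt. lra.
    - exfalso. assert (b <= x); [|lra]. apply Hlub. intros t Tt.
      destruct (Rle_dec t x); auto. exfalso; apply Hn; exists t; split; auto; lra. }
  assert (Hab : a b = 0).
  { destruct (Rle_dec (a b) 0) as [|Hn]; [specialize (Hnonneg b); lra|]. exfalso.
    assert (Hbz0 : b < z0) by (destruct (Req_dec b z0); [subst; lra| lra]).
    (* a stays positive on [b, b + d] by continuity, contradicting b = sup T *)
    set (d := Rmin ((a b) / (2 * (Rabs C + 1))) ((z0 - b) / 2)).
    assert (HC := Rabs_pos C).
    assert (Hd : 0 < d) by (apply Rmin_pos; [apply Rdiv_lt_0_compat|]; lra).
    assert (Hd1 : d <= (a b) / (2 * (Rabs C + 1))) by apply Rmin_l.
    assert (Hd2 : d <= (z0 - b) / 2) by apply Rmin_r.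
    assert (Hd3 : (Rabs C + 1) * d <= a b / 2).
    { apply (Rmult_le_compat_l (Rabs C + 1)) in Hd1; [|lra].
      replace ((Rabs C + 1) * (a b / (2 * (Rabs C + 1)))) with (a b / 2) in Hd1 by (field; lra).
      lra. }
    assert (Tt : T (b + d)).
    { split; [lra|]. intros z Hz1. destruct (Rlt_dec z b) as [Hzb|Hzb]; [apply Hbelow; lra|].
      specialize (Hlip z b). assert (Hzd : Rabs (z - b) <= d) by (rewrite Rabs_right; lra).
      assert (C * Rabs (z - b) <= (Rabs C + 1) * d).
      { assert (0 <= Rabs (z - b)) by apply Rabs_pos. assert (C <= Rabs C) by apply RRle_abs. nra. }
      apply Rabs_le_between in Hlip. lra. }
    specialize (Hub _ Tt). lra. }
  exists b. split; [|split]; auto.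
  destruct (Req_dec y b); [subst; lra| lra].
Qed.

Lemma positivity_interval_right x0 y : a x0 = 0 -> 0 < a y ->
  exists l, 0 < l /\ l <= Rabs (y - x0) /\
    forall x, y <= x <= y + l -> 0 < a x /\ a x <= 4 * k2 * l ^ 2.
Proof.
  intros Hx0 Hy.
  set (D := Rabs (y - x0)).
  assert (HD : 0 < D) by (apply Rabs_pos_lt; intro; assert (y = x0) by lra; subst; lra).
  assert (Hk2 : 0 <= k2).
  { specialize (Hquad y x0 Hx0). assert (0 < (y - x0) ^ 2) by (rewrite <- Rabs_sqr; fold D; nra).
    nra. }
  destruct (classic (forall x, y <= x <= y + D -> 0 < a x)) as [Hall | Hnall].
  - exists D. split; [lra| split; [lra|]]. intros x Hx. split; [apply Hall; auto|].
    eapply Rle_trans; [apply (Hquad x x0 Hx0)|].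
    assert (Rabs (x - x0) <= 2 * D).
    { replace (x - x0) with ((x - y) + (y - x0)) by ring.
      eapply Rle_trans; [apply Rabs_triang|]. rewrite Rabs_right by lra. unfold D in *; lra. }
    assert (0 <= Rabs (x - x0)) by apply Rabs_pos.
    assert (Rabs (x - x0) * Rabs (x - x0) <= 4 * D ^ 2) by nra.
    rewrite <- (Rabs_sqr (x - x0)). nra.
  - apply not_all_ex_not in Hnall. destruct Hnall as [z0 Hz0].
    apply imply_to_and in Hz0. destruct Hz0 as [Hz0r Hz0a].
    destruct (first_zero_right y z0 Hy ltac:(lra) ltac:(specialize (Hnonneg z0); lra))
      as [b [Hyb [Hab Hbelow]]].
    assert (Hbz : b <= y + D).
    { destruct (Rle_dec b (y + D)) as [|Hn]; auto. specialize (Hbelow z0 ltac:(lra)). lra. }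
    exists ((b - y) / 2). split; [lra| split; [unfold D in *; lra|]].
    intros x Hx. split; [apply Hbelow; lra|].
    eapply Rle_trans; [apply (Hquad x b Hab)|].
    replace (4 * k2 * ((b - y) / 2) ^ 2) with (k2 * (b - y) ^ 2) by field.
    assert ((x - b) ^ 2 <= (b - y) ^ 2) by nra. nra.
Qed.

End PositivityInterval.

Lemma positivity_interval_left (a : R -> R) (C k2 x0 y : R) :
  (forall x, 0 <= a x) ->
  (forall x z, Rabs (a x - a z) <= C * Rabs (x - z)) ->
  (forall x e, a e = 0 -> a x <= k2 * (x - e) ^ 2) ->
  a x0 = 0 -> 0 < a y ->
  exists l, 0 < l /\ l <= Rabs (y - x0) /\
    forall x, y - l <= x <= y -> 0 < a x /\ a x <= 4 * k2 * l ^ 2.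
Proof.
  intros Hnn Hlip Hquad Hx0 Hy.
  destruct (positivity_interval_right (fun x => a (- x)) C k2 (fun x => Hnn (- x)))
    with (x0 := - x0) (y := - y) as [l [Hl1 [Hl2 Hl3]]].
  - intros x z. replace (x - z) with (- ((- x) - (- z))) by ring. rewrite Rabs_Ropp. apply Hlip.
  - intros x e He. replace ((x - e) ^ 2) with (((- x) - (- e)) ^ 2) by ring. apply Hquad; auto.
  - rewrite Ropp_involutive; auto.
  - rewrite Ropp_involutive; auto.
  - exists l. split; [|split]; auto.
    + replace (y - x0) with (- (- y - - x0)) by ring. rewrite Rabs_Ropp; auto.
    + intros x Hx. specialize (Hl3 (- x) ltac:(lra)). rewrite Ropp_involutive in Hl3. auto.
Qed.

Lemma Lub_Rbar_finite (E : R -> Prop) e0 B : E e0 -> (forall x, E x -> x <= B) ->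
  (forall x, E x -> x <= real (Lub_Rbar E)) /\
  (forall b, (forall x, E x -> x <= b) -> real (Lub_Rbar E) <= b).
Proof.
  intros He0 HB. generalize (Lub_Rbar_correct E).
  destruct (Lub_Rbar E) as [r| |]; intros [Hub Hlub]; simpl.
  - split; [exact Hub|]. intros b Hb. apply (Hlub (Finite b)). exact Hb.
  - exfalso. apply (Hlub (Finite B)). exact HB.
  - exfalso. apply (Hub e0 He0).
Qed.

Lemma Glb_Rbar_finite (E : R -> Prop) e0 B : E e0 -> (forall x, E x -> B <= x) ->
  (forall x, E x -> real (Glb_Rbar E) <= x) /\
  (forall b, (forall x, E x -> b <= x) -> b <= real (Glb_Rbar E)).
Proof.
  intros He0 HB. generalize (Glb_Rbar_correct E).
  destruct (Glb_Rbar E) as [r| |]; intros [Hlb Hglb]; simpl.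
  - split; [exact Hlb|]. intros b Hb. apply (Hglb (Finite b)). exact Hb.
  - exfalso. apply (Hlb e0 He0).
  - exfalso. apply (Hglb (Finite B)). exact HB.
Qed.

Lemma Glb_Rbar_opp (E : R -> Prop) e0 B1 B2 : E e0 -> (forall x, E x -> B1 <= x <= B2) ->
  real (Glb_Rbar E) = - real (Lub_Rbar (fun p => E (- p))).
Proof.
  intros He0 HB.
  destruct (Glb_Rbar_finite E e0 B1 He0) as [G1 G2]; [intros x Ex; apply (HB x Ex)|].
  destruct (Lub_Rbar_finite (fun p => E (- p)) (- e0) (- B1)) as [L1 L2].
  - rewrite Ropp_involutive; auto.
  - intros x Ex. specialize (HB _ Ex); lra.
  - apply Rle_antisym.
    + assert (real (Lub_Rbar (fun p => E (- p))) <= - real (Glb_Rbar E)); [|lra].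
      apply L2. intros x Ex. specialize (G1 _ Ex). lra.
    + assert (- real (Lub_Rbar (fun p => E (- p))) <= real (Glb_Rbar E)); [|lra].
      apply G2. intros x Ex. assert (Ex' : E (- - x)) by (rewrite Ropp_involutive; auto).
      specialize (L1 _ Ex'). lra.
Qed.

(* The one-variable content of [H_sqc] at a fixed [x], with [ph = phat x]. *)
Definition sharp_quasiconvex (h : R -> R) (ph eta : R) : Prop :=
  0 < eta /\ (forall p, h ph <= h p) /\
  (forall p1 p2, p1 < p2 <= ph -> h p1 - h p2 >= eta * Rabs (p1 - p2)) /\
  (forall p1 p2, ph <= p1 < p2 -> h p2 - h p1 >= eta * Rabs (p1 - p2)) /\
  (forall R0, exists C, 0 <= C /\ forall p q, Rabs p <= R0 -> Rabs q <= R0 ->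
     Rabs (h p - h q) <= C * Rabs (p - q)).

Lemma sharp_quasiconvex_reflect h ph eta :
  sharp_quasiconvex h ph eta -> sharp_quasiconvex (fun p => h (- p)) (- ph) eta.
Proof.
  intros [He [Hm [Hdec [Hinc Hlip]]]]. split; auto. split; [|split; [|split]].
  - intros p. rewrite Ropp_involutive. apply Hm.
  - intros p1 p2 Hp. specialize (Hinc (- p2) (- p1) ltac:(lra)).
    replace (p1 - p2) with (- p2 - - p1) by ring. lra.
  - intros p1 p2 Hp. specialize (Hdec (- p2) (- p1) ltac:(lra)).
    replace (p1 - p2) with (- p2 - - p1) by ring. lra.
  - intros R0. destruct (Hlip R0) as [C [HC HC2]]. exists C. split; auto. intros p q Hp Hq.
    replace (p - q) with (- (- p - - q)) by ring. rewrite Rabs_Ropp.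
    apply HC2; rewrite Rabs_Ropp; auto.
Qed.

Definition sublevel_sup (h : R -> R) (lam : R) : R := real (Lub_Rbar (fun p => h p <= lam)).
Definition sublevel_inf (h : R -> R) (lam : R) : R := real (Glb_Rbar (fun p => h p <= lam)).

Section SublevelSup.
Variables (h : R -> R) (ph eta : R).
Hypothesis Hg : sharp_quasiconvex h ph eta.

Lemma sublevel_dist lam p : h p <= lam -> Rabs (p - ph) <= (lam - h ph) / eta.
Proof.
  destruct Hg as [He [Hm [Hdec [Hinc _]]]]. intros Hp.
  apply (Rmult_le_reg_l eta); auto.
  replace (eta * ((lam - h ph) / eta)) with (lam - h ph) by (field; lra).
  destruct (Rtotal_order p ph) as [Hlt|[->|Hgt]].
  - specialize (Hdec p ph ltac:(lra)). lra.
  - rewrite Rminus_diag, Rabs_R0. specialize (Hm ph). lra.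
  - specialize (Hinc ph p ltac:(lra)). rewrite Rabs_minus_sym. lra.
Qed.

Lemma sublevel_bounds lam p : h p <= lam ->
  ph - (lam - h ph) / eta <= p <= ph + (lam - h ph) / eta.
Proof. intros Hp. assert (Hd := sublevel_dist lam p Hp). apply Rabs_le_between' in Hd. lra. Qed.

Section Level.
Variable lam : R.
Hypothesis Hlam : h ph <= lam.

Lemma sublevel_sup_spec :
  (forall p, h p <= lam -> p <= sublevel_sup h lam) /\
  (forall b, (forall p, h p <= lam -> p <= b) -> sublevel_sup h lam <= b).
Proof.
  apply (Lub_Rbar_finite _ ph (ph + (lam - h ph) / eta)); [exact Hlam|].
  intros x Ex. apply (sublevel_bounds lam x Ex).
Qed.

Lemma sublevel_sup_bounds : ph <= sublevel_sup h lam <= ph + (lam - h ph) / eta.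
Proof.
  destruct sublevel_sup_spec as [Hub Hlub]. split; [apply Hub, Hlam|].
  apply Hlub. intros x Ex. apply (sublevel_bounds lam x Ex).
Qed.

Lemma lt_sublevel_sup p : sublevel_sup h lam < p -> lam < h p.
Proof.
  intros Hp. destruct (Rlt_dec lam (h p)) as [|Hn]; auto.
  assert (p <= sublevel_sup h lam) by (apply sublevel_sup_spec; lra). lra.
Qed.

Lemma sublevel_sup_approx e : 0 < e -> exists p, h p <= lam /\ sublevel_sup h lam - e < p.
Proof.
  intros He. apply NNPP. intros Hn.
  assert (sublevel_sup h lam <= sublevel_sup h lam - e); [|lra].
  apply sublevel_sup_spec. intros x Ex. apply Rnot_lt_le. intro Hx. apply Hn. exists x; auto.
Qed.

Lemma above_sublevel_sup p e : 0 < e -> sublevel_sup h lam + e <= p -> lam + eta * e / 2 <= h p.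
Proof.
  intros He Hp. destruct Hg as [Het [_ [_ [Hinc _]]]].
  assert (H1 := lt_sublevel_sup (sublevel_sup h lam + e / 2) ltac:(lra)).
  assert (H2 := sublevel_sup_bounds).
  specialize (Hinc (sublevel_sup h lam + e / 2) p ltac:(lra)).
  rewrite Rabs_left in Hinc by lra. nra.
Qed.

Lemma below_sublevel_sup p e : 0 < e -> ph <= p -> p <= sublevel_sup h lam - e ->
  h p <= lam - eta * e / 2.
Proof.
  intros He Hp1 Hp2. destruct Hg as [Het [_ [_ [Hinc _]]]].
  destruct (sublevel_sup_approx (e / 2)) as [p2 [Hp3 Hp4]]; [lra|].
  specialize (Hinc p p2 ltac:(lra)). rewrite Rabs_left in Hinc by lra. nra.
Qed.

End Level.

Lemma sublevel_sup_lt lam1 lam2 : lam1 < lam2 -> h ph <= lam1 ->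
  sublevel_sup h lam1 < sublevel_sup h lam2.
Proof.
  intros H12 H1. assert (Het : 0 < eta) by apply Hg.
  destruct Hg as [_ [_ [_ [_ Hlip]]]].
  set (R0 := Rabs ph + (lam1 - h ph) / eta + 1).
  destruct (Hlip R0) as [C [HC HC2]].
  (* a point at distance [t] beyond the [lam1]-sup still lies in the [lam2]-sublevel set *)
  set (t := Rmin 1 ((lam2 - lam1) / (2 * C + 1))).
  assert (Ht : 0 < t) by (apply Rmin_pos; [lra| apply Rdiv_lt_0_compat; lra]).
  assert (Ht1 : t <= 1) by apply Rmin_l.
  assert (Ht2 : C * (2 * t) <= lam2 - lam1).
  { assert (Ht2 : t <= (lam2 - lam1) / (2 * C + 1)) by apply Rmin_r.
    apply (Rmult_le_compat_l (2 * C + 1)) in Ht2; [|lra].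
    replace ((2 * C + 1) * ((lam2 - lam1) / (2 * C + 1))) with (lam2 - lam1) in Ht2
      by (field; lra).
    nra. }
  destruct (sublevel_sup_approx lam1 H1 t Ht) as [p2 [Hp2 Hp2']].
  assert (Hp2s : p2 <= sublevel_sup h lam1) by (apply sublevel_sup_spec; auto).
  assert (Hb := sublevel_bounds lam1 p2 Hp2).
  assert (Hs := sublevel_sup_bounds lam1 H1).
  set (q := sublevel_sup h lam1 + t).
  assert (Hq : h q <= lam2).
  { assert (Hph := Rabs_bounds ph).
    assert (0 <= (lam1 - h ph) / eta) by (apply Rdiv_le_0_compat; lra).
    assert (Hq : Rabs q <= R0) by (apply Rabs_le; unfold q, R0; lra).
    assert (Hp : Rabs p2 <= R0) by (apply Rabs_le; unfold R0; lra).
    specialize (HC2 q p2 Hq Hp).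
    rewrite (Rabs_right (q - p2)) in HC2 by (unfold q; lra).
    apply Rabs_le_between in HC2.
    assert (C * (q - p2) <= C * (2 * t)) by (apply Rmult_le_compat_l; unfold q; lra).
    lra. }
  assert (q <= sublevel_sup h lam2) by (apply (sublevel_sup_spec lam2); [lra| auto]).
  unfold q in *. lra.
Qed.

Lemma min_value_eq : real (Glb_Rbar (fun v => exists p, v = h p)) = h ph.
Proof.
  destruct Hg as [_ [Hm _]].
  rewrite (is_glb_Rbar_unique _ (Finite (h ph))); auto. split.
  - intros x [p ->]. apply Hm.
  - intros b Hb. apply (Hb (h ph)). exists ph; auto.
Qed.

End SublevelSup.

Section SublevelInf.
Variables (h : R -> R) (ph eta : R).
Hypothesis Hg : sharp_quasiconvex h ph eta.
Let h' := fun p => h (- p).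
Let Hg' := sharp_quasiconvex_reflect h ph eta Hg.

Lemma sublevel_inf_opp lam : h ph <= lam -> sublevel_inf h lam = - sublevel_sup h' lam.
Proof.
  intros Hl. unfold sublevel_inf, sublevel_sup, h'.
  apply (Glb_Rbar_opp (fun p => h p <= lam) ph (ph - (lam - h ph) / eta) (ph + (lam - h ph) / eta)); auto.
  intros x Ex. apply (sublevel_bounds h ph eta Hg lam x Ex).
Qed.

Lemma reflect_min_le lam : h ph <= lam -> h' (- ph) <= lam.
Proof. unfold h'. rewrite Ropp_involutive. auto. Qed.

Lemma sublevel_inf_le_min lam : h ph <= lam -> sublevel_inf h lam <= ph.
Proof.
  intros Hl. rewrite sublevel_inf_opp by auto.
  destruct (sublevel_sup_bounds h' (- ph) eta Hg' lam (reflect_min_le lam Hl)). lra.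
Qed.

Lemma lt_sublevel_inf lam p : h ph <= lam -> p < sublevel_inf h lam -> lam < h p.
Proof.
  intros Hl Hp. rewrite sublevel_inf_opp in Hp by auto.
  assert (Hlt := lt_sublevel_sup h' (- ph) eta Hg' lam (reflect_min_le lam Hl) (- p) ltac:(lra)).
  unfold h' in Hlt. rewrite Ropp_involutive in Hlt; auto.
Qed.

Lemma above_sublevel_inf lam p e : h ph <= lam -> 0 < e -> p <= ph -> sublevel_inf h lam + e <= p ->
  h p <= lam - eta * e / 2.
Proof.
  intros Hl He Hp1 Hp2. rewrite sublevel_inf_opp in Hp2 by auto.
  assert (Hle := below_sublevel_sup h' (- ph) eta Hg' lam (reflect_min_le lam Hl) (- p) e He
    ltac:(lra) ltac:(lra)).
  unfold h' in Hle. rewrite Ropp_involutive in Hle; auto.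
Qed.

Lemma sublevel_inf_lt lam1 lam2 : lam1 < lam2 -> h ph <= lam1 ->
  sublevel_inf h lam2 < sublevel_inf h lam1.
Proof.
  intros H12 Hl. rewrite !sublevel_inf_opp by lra.
  assert (Hlt := sublevel_sup_lt h' (- ph) eta Hg' lam1 lam2 H12 (reflect_min_le lam1 Hl)). lra.
Qed.

Lemma sublevel_interior_gap lam p e1 e2 : h ph <= lam -> 0 < e1 -> 0 < e2 ->
  sublevel_inf h lam + e1 <= p -> p <= sublevel_sup h lam - e2 ->
  h p <= lam - eta * Rmin e1 e2 / 2.
Proof.
  intros Hl He1 He2 Hp1 Hp2. assert (Het : 0 < eta) by apply Hg.
  assert (Hm1 := Rmin_l e1 e2). assert (Hm2 := Rmin_r e1 e2).
  destruct (Rle_dec ph p) as [Hp|Hp].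
  - assert (Hb := below_sublevel_sup h ph eta Hg lam Hl p e2 He2 Hp Hp2). nra.
  - assert (Hb := above_sublevel_inf lam p e1 Hl He1 ltac:(lra) Hp1). nra.
Qed.

End SublevelInf.

Section Hamiltonian.
Variables (alpha0 alpha1 gamma eta : R) (H : R -> R -> R) (phat : R -> R).
Hypothesis HH : H_sqc alpha0 alpha1 gamma eta H phat.

Lemma H_sqc_sharp x : sharp_quasiconvex (H x) (phat x) eta.
Proof.
  destruct HH as [Ha0 [Ha1 [Hg [He [_ [HH2 [_ [_ [Hm [Hdec Hinc]]]]]]]]]].
  split; auto. split; [|split; [|split]].
  - intros p. destruct (Req_dec p (phat x)) as [->|Hn]; [lra|]. left; apply Hm; auto.
  - intros; apply Hdec; auto.
  - intros; apply Hinc; auto.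
  - intros R0. exists (alpha1 * pw (2 * Rabs R0 + 1) (gamma - 1)).
    split; [apply Rmult_le_pos; [lra| apply pw_nonneg]|].
    intros p q Hp Hq. eapply Rle_trans; [apply HH2|].
    apply Rmult_le_compat_r; [apply Rabs_pos|]. apply Rmult_le_compat_l; [lra|].
    apply pw_mono; [lra|]. assert (R0 <= Rabs R0) by apply RRle_abs. lra.
Qed.

Lemma H_lower x p : - / alpha0 <= H x p.
Proof.
  destruct HH as [Ha0 [_ [_ [_ [HH1 _]]]]]. destruct (HH1 x p) as [H1 _].
  assert (0 <= alpha0 * pw (Rabs p) gamma) by (apply Rmult_le_pos; [lra| apply pw_nonneg]).
  lra.
Qed.

Lemma H_upper x p R0 : Rabs p <= R0 -> H x p <= alpha1 * (pw R0 gamma + 1).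
Proof.
  intros Hp. destruct HH as [_ [Ha1 [Hg [_ [HH1 _]]]]]. destruct (HH1 x p) as [_ H1].
  assert (pw (Rabs p) gamma <= pw R0 gamma) by (apply pw_mono; lra). nra.
Qed.

Lemma H_x_lipschitz x y p R0 : Rabs p <= R0 ->
  Rabs (H x p - H y p) <= alpha1 * (pw R0 gamma + 1) * Rabs (x - y).
Proof.
  intros Hp. destruct HH as [_ [Ha1 [Hg [_ [_ [_ [HH3 _]]]]]]].
  eapply Rle_trans; [apply HH3|]. apply Rmult_le_compat_r; [apply Rabs_pos|].
  apply Rmult_le_compat_l; [lra|].
  assert (pw (Rabs p) gamma <= pw R0 gamma) by (apply pw_mono; lra). lra.
Qed.

End Hamiltonian.

Definition quad (al be ga : R) : R -> R := fun x => al + be * x + ga * (x * x).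

Lemma is_derive_quad al be ga x : is_derive (quad al be ga) x (be + 2 * ga * x).
Proof. unfold quad. auto_derive; auto. ring. Qed.

Lemma Derive_quad al be ga x : Derive (quad al be ga) x = be + 2 * ga * x.
Proof. apply is_derive_unique, is_derive_quad. Qed.

Lemma Derive2_quad al be ga x : Derive (Derive (quad al be ga)) x = 2 * ga.
Proof.
  rewrite (Derive_ext _ (fun x => be + 2 * ga * x)) by (intros; apply Derive_quad).
  apply is_derive_unique. auto_derive; auto. ring.
Qed.

Lemma C2_quad al be ga : C2 (quad al be ga).
Proof.
  split; [|split].
  - intros x. eexists; apply is_derive_quad.
  - intros x. apply (ex_derive_ext (fun x => be + 2 * ga * x)).
    + intros t; symmetry; apply Derive_quad.
    + auto_derive; auto.
  - intros x. apply (continuous_ext (fun _ => 2 * ga)).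
    + intros t; symmetry; apply Derive2_quad.
    + apply continuous_const.
Qed.

Lemma continuity_pt_quad al be ga x : continuity_pt (quad al be ga) x.
Proof.
  apply derivable_continuous_pt. exists (be + 2 * ga * x).
  apply is_derive_Reals, is_derive_quad.
Qed.

Section TestFunctions.
Variables (a : R -> R) (H : R -> R -> R) (lam0 : R) (u : R -> R).

Lemma visc_super_at_min al be ga s t m : visc_super a H lam0 u -> s < m < t ->
  (forall x, s <= x <= t -> u m - quad al be ga m <= u x - quad al be ga x) ->
  a m * (2 * ga) + H m (be + 2 * ga * m) <= lam0.
Proof.
  intros [_ Hs] Hm Hmin.
  specialize (Hs (quad (al + (u m - quad al be ga m)) be ga) m (C2_quad _ _ _)).
  rewrite Derive_quad, Derive2_quad in Hs. apply Hs. split; [unfold quad; ring|].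
  exists (Rmin (m - s) (t - m)). split; [apply Rmin_pos; lra|].
  intros y Hy. assert (Rmin (m - s) (t - m) <= m - s) by apply Rmin_l.
  assert (Rmin (m - s) (t - m) <= t - m) by apply Rmin_r.
  apply Rabs_def2 in Hy. specialize (Hmin y ltac:(lra)). unfold quad in *. lra.
Qed.

Lemma visc_sub_at_max al be ga s t m : visc_sub a H lam0 u -> s < m < t ->
  (forall x, s <= x <= t -> u x - quad al be ga x <= u m - quad al be ga m) ->
  a m * (2 * ga) + H m (be + 2 * ga * m) >= lam0.
Proof.
  intros [_ Hs] Hm Hmax.
  specialize (Hs (quad (al + (u m - quad al be ga m)) be ga) m (C2_quad _ _ _)).
  rewrite Derive_quad, Derive2_quad in Hs. apply Hs. split; [unfold quad; ring|].
  exists (Rmin (m - s) (t - m)). split; [apply Rmin_pos; lra|].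
  intros y Hy. assert (Rmin (m - s) (t - m) <= m - s) by apply Rmin_l.
  assert (Rmin (m - s) (t - m) <= t - m) by apply Rmin_r.
  apply Rabs_def2 in Hy. specialize (Hmax y ltac:(lra)). unfold quad in *. lra.
Qed.

End TestFunctions.

Section LipschitzFunction.
Variables (u : R -> R) (L : R).
Hypothesis HL : forall x y, Rabs (u x - u y) <= L * Rabs (x - y).

Lemma lipschitz_const_nonneg : 0 <= L.
Proof.
  specialize (HL 1 0). assert (H0 := Rabs_pos (u 1 - u 0)).
  rewrite Rminus_0_r, Rabs_R1 in HL. lra.
Qed.

Lemma lipschitz_continuity_pt x : continuity_pt u x.
Proof.
  apply continuity_pt_locally. intros eps. assert (HL0 := lipschitz_const_nonneg).
  assert (Hd : 0 < eps / (L + 1)) by (apply Rdiv_lt_0_compat; [apply cond_pos| lra]).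
  exists (mkposreal _ Hd). intros z Hz. apply ball_R in Hz. simpl in Hz.
  eapply Rle_lt_trans; [apply HL|].
  apply (Rle_lt_trans _ ((L + 1) * Rabs (z - x))).
  - assert (0 <= Rabs (z - x)) by apply Rabs_pos. nra.
  - apply (Rmult_lt_compat_l (L + 1)) in Hz; [|lra].
    replace ((L + 1) * (eps / (L + 1))) with (pos eps) in Hz by (field; lra). exact Hz.
Qed.

Lemma continuity_pt_minus_quad al be ga x : continuity_pt (fun x => u x - quad al be ga x) x.
Proof.
  apply (continuity_pt_minus u (quad al be ga)).
  - apply lipschitz_continuity_pt.
  - apply continuity_pt_quad.
Qed.

Lemma lipschitz_slope_at_max al be ga s t m : s < m < t ->
  (forall x, s <= x <= t -> u x - quad al be ga x <= u m - quad al be ga m) ->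
  Rabs (be + 2 * ga * m) <= L.
Proof.
  intros Hm Hmax. set (sg := be + 2 * ga * m).
  assert (Hk : forall k, s <= m + k <= t -> sg * k + ga * (k * k) >= - L * Rabs k).
  { intros k Hk. specialize (Hmax (m + k) Hk). specialize (HL (m + k) m).
    replace (m + k - m) with k in HL by ring. apply Rabs_le_between in HL.
    unfold quad, sg in *. nra. }
  assert (Hga := Rabs_pos ga). assert (Hga2 := Rabs_bounds ga).
  apply Rabs_le. split.
  - apply (Rle_plus_small _ _ 1); [lra|]. intros k' Hk1 Hk2.
    set (k := Rmin (t - m) (k' / (Rabs ga + 1))).
    assert (H1 : 0 < k) by (apply Rmin_pos; [lra| apply Rdiv_lt_0_compat; lra]).
    assert (H2 : k <= t - m) by apply Rmin_l.
    assert (H3 : k <= k' / (Rabs ga + 1)) by apply Rmin_r.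
    assert (H4 : (Rabs ga + 1) * (k' / (Rabs ga + 1)) = k') by (field; lra).
    specialize (Hk k ltac:(lra)). rewrite Rabs_right in Hk by lra.
    assert (sg + ga * k >= - L) by nra.
    nra.
  - apply (Rle_plus_small _ _ 1); [lra|]. intros k' Hk1 Hk2.
    set (k := Rmin (m - s) (k' / (Rabs ga + 1))).
    assert (H1 : 0 < k) by (apply Rmin_pos; [lra| apply Rdiv_lt_0_compat; lra]).
    assert (H2 : k <= m - s) by apply Rmin_l.
    assert (H3 : k <= k' / (Rabs ga + 1)) by apply Rmin_r.
    assert (H4 : (Rabs ga + 1) * (k' / (Rabs ga + 1)) = k') by (field; lra).
    specialize (Hk (- k) ltac:(lra)). rewrite Rabs_Ropp, Rabs_right in Hk by lra.
    assert (sg - ga * k <= L) by nra.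
    nra.
Qed.

End LipschitzFunction.

Lemma Rdiv_le_cross_pos A B h k : 0 < h * k -> A * k <= B * h -> A / h <= B / k.
Proof.
  intros Hhk Hle. assert (h <> 0) by (intro; subst; lra). assert (k <> 0) by (intro; subst; lra).
  replace (A / h) with ((A * k) * / (h * k)) by (field; auto).
  replace (B / k) with ((B * h) * / (h * k)) by (field; auto).
  apply Rmult_le_compat_r; auto. left; apply Rinv_0_lt_compat; auto.
Qed.

Lemma Rdiv_le_cross_neg A B h k : h * k < 0 -> B * h <= A * k -> A / h <= B / k.
Proof.
  intros Hhk Hle. assert (h <> 0) by (intro; subst; lra). assert (k <> 0) by (intro; subst; lra).
  replace (A / h) with ((- (A * k)) * / (- (h * k))) by (field; auto).
  replace (B / k) with ((- (B * h)) * / (- (h * k))) by (field; auto).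
  apply Rmult_le_compat_r; [left; apply Rinv_0_lt_compat|]; lra.
Qed.

Definition three_point_convex (v : R -> R) (lo hi : R) : Prop :=
  forall p q s, lo <= p -> p < q -> q < s -> s <= hi ->
    v q * (s - p) <= (s - q) * v p + (q - p) * v s.

Lemma chord_slope_mono (v : R -> R) (y r : R) : three_point_convex v (y - r) (y + r) ->
  forall h k, - r <= h -> h < k -> k <= r -> h <> 0 -> k <> 0 ->
    (v (y + h) - v y) / h <= (v (y + k) - v y) / k.
Proof.
  intros Hc h k H1 H2 H3 Hh Hk.
  destruct (Rlt_dec k 0) as [Hk0|Hk0]; [|destruct (Rlt_dec h 0) as [Hh0|Hh0]].
  - specialize (Hc (y + h) (y + k) y ltac:(lra) ltac:(lra) ltac:(lra) ltac:(lra)).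
    apply Rdiv_le_cross_pos; [nra|].
    replace (y + k - (y + h)) with (k - h) in Hc by ring.
    replace (y - (y + h)) with (- h) in Hc by ring. replace (y - (y + k)) with (- k) in Hc by ring.
    nra.
  - specialize (Hc (y + h) y (y + k) ltac:(lra) ltac:(lra) ltac:(lra) ltac:(lra)).
    apply Rdiv_le_cross_neg; [nra|].
    replace (y + k - (y + h)) with (k - h) in Hc by ring.
    replace (y - (y + h)) with (- h) in Hc by ring. replace (y + k - y) with k in Hc by ring.
    nra.
  - specialize (Hc y (y + h) (y + k) ltac:(lra) ltac:(lra) ltac:(lra) ltac:(lra)).
    apply Rdiv_le_cross_pos; [nra|].
    replace (y + k - y) with k in Hc by ring.
    replace (y + h - y) with h in Hc by ring. replace (y + k - (y + h)) with (k - h) in Hc by ring.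
    nra.
Qed.

Lemma difference_quotient_lipschitz (u : R -> R) (y r K : R) :
  three_point_convex (fun x => u x + K / 2 * ((x - y) * (x - y))) (y - r) (y + r) ->
  three_point_convex (fun x => - u x + K / 2 * ((x - y) * (x - y))) (y - r) (y + r) ->
  forall h k, 0 < Rabs h <= r -> 0 < Rabs k <= r ->
    Rabs ((u (y + h) - u y) / h - (u (y + k) - u y) / k) <= K / 2 * Rabs (h - k).
Proof.
  intros Hc1 Hc2.
  assert (Hlt : forall h k, 0 < Rabs h <= r -> 0 < Rabs k <= r -> h < k ->
    Rabs ((u (y + h) - u y) / h - (u (y + k) - u y) / k) <= K / 2 * Rabs (h - k)).
  { intros h k Hh Hk Hhk.
    assert (Hh0 : h <> 0) by (intro; subst; rewrite Rabs_R0 in Hh; lra).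
    assert (Hk0 : k <> 0) by (intro; subst; rewrite Rabs_R0 in Hk; lra).
    assert (Hh' : - r <= h <= r) by (apply Rabs_le_between; lra).
    assert (Hk' : - r <= k <= r) by (apply Rabs_le_between; lra).
    assert (A1 := chord_slope_mono _ y r Hc1 h k ltac:(lra) Hhk ltac:(lra) Hh0 Hk0).
    assert (A2 := chord_slope_mono _ y r Hc2 h k ltac:(lra) Hhk ltac:(lra) Hh0 Hk0).
    cbv beta in A1, A2.
    replace ((u (y + h) + K / 2 * ((y + h - y) * (y + h - y)) - (u y + K / 2 * ((y - y) * (y - y)))) / h)
      with ((u (y + h) - u y) / h + K / 2 * h) in A1 by (field; auto).
    replace ((u (y + k) + K / 2 * ((y + k - y) * (y + k - y)) - (u y + K / 2 * ((y - y) * (y - y)))) / k)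
      with ((u (y + k) - u y) / k + K / 2 * k) in A1 by (field; auto).
    replace ((- u (y + h) + K / 2 * ((y + h - y) * (y + h - y)) - (- u y + K / 2 * ((y - y) * (y - y)))) / h)
      with (- ((u (y + h) - u y) / h) + K / 2 * h) in A2 by (field; auto).
    replace ((- u (y + k) + K / 2 * ((y + k - y) * (y + k - y)) - (- u y + K / 2 * ((y - y) * (y - y)))) / k)
      with (- ((u (y + k) - u y) / k) + K / 2 * k) in A2 by (field; auto).
    rewrite (Rabs_left1 (h - k)) by lra. apply Rabs_le. lra. }
  intros h k Hh Hk. destruct (Rtotal_order h k) as [E|[->|E]].
  - apply Hlt; auto.
  - rewrite !Rminus_diag, Rabs_R0. lra.
  - rewrite Rabs_minus_sym, (Rabs_minus_sym h). apply Hlt; auto.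
Qed.

Section PuncturedLimit.
Variables (S : R -> R) (r K : R).
Hypothesis Hr : 0 < r.
Hypothesis HK : 0 <= K.
Hypothesis HS : forall h k, 0 < Rabs h <= r -> 0 < Rabs k <= r -> Rabs (S h - S k) <= K * Rabs (h - k).

Lemma lipschitz_right_limit : exists l, forall h, 0 < h <= r -> Rabs (S h - l) <= K * h.
Proof.
  (* the limit is the sup over [h] in [(0, r]] of [S h - K h] *)
  set (E := fun w => exists h, 0 < h <= r /\ w = S h - K * h).
  assert (HSpos : forall h k, 0 < h <= r -> 0 < k <= r -> Rabs (S h - S k) <= K * Rabs (h - k))
    by (intros h k Hh Hk; apply HS; rewrite Rabs_right; lra).
  assert (Eb : bound E).
  { exists (S r + K * r). intros w [h [Hh ->]].
    specialize (HSpos h r Hh ltac:(lra)). apply Rabs_le_between in HSpos.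
    rewrite Rabs_left1 in HSpos by lra. nra. }
  destruct (completeness E Eb
    (ex_intro _ (S r - K * r) (ex_intro _ r (conj (conj Hr (Rle_refl r)) eq_refl))))
    as [l [Hub Hlub]].
  exists l. intros h Hh. apply Rabs_le.
  assert (S h - K * h <= l) by (apply Hub; exists h; split; auto).
  assert (l <= S h + K * h); [|lra].
  apply Hlub. intros w [h' [Hh' ->]].
  specialize (HSpos h' h Hh' Hh). apply Rabs_le_between in HSpos.
  assert (Rabs (h' - h) <= h' + h) by (apply Rabs_le; lra). nra.
Qed.

Lemma lipschitz_punctured_limit : exists l, forall h, 0 < Rabs h <= r -> Rabs (S h - l) <= K * Rabs h.
Proof.
  destruct lipschitz_right_limit as [l Hpos]. exists l. intros h Hh.
  destruct (Rlt_dec 0 h) as [Hh0|Hh0].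
  - rewrite (Rabs_right h) in * by lra. apply Hpos. lra.
  - assert (Hhn : h < 0).
    { destruct (Rnot_lt_le _ _ Hh0) as [|Eh]; auto. subst. rewrite Rabs_R0 in Hh. lra. }
    apply Rle_plus_epsilon. intros eps Heps.
    set (k := Rmin r (eps / (2 * K + 1))).
    assert (Hk : 0 < k <= r) by (split; [apply Rmin_pos; [lra| apply Rdiv_lt_0_compat; lra]| apply Rmin_l]).
    assert (Hk2 : 2 * K * k <= eps).
    { assert (Hk3 : k <= eps / (2 * K + 1)) by apply Rmin_r.
      apply (Rmult_le_compat_l (2 * K + 1)) in Hk3; [|lra].
      replace ((2 * K + 1) * (eps / (2 * K + 1))) with eps in Hk3 by (field; lra). nra. }
    specialize (HS h k Hh ltac:(rewrite Rabs_right; lra)).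
    rewrite (Rabs_left1 (h - k)) in HS by lra. rewrite (Rabs_left h) in * by lra.
    specialize (Hpos k Hk).
    assert (Rabs (S h - l) <= Rabs (S h - S k) + Rabs (S k - l))
      by (replace (S h - l) with ((S h - S k) + (S k - l)) by ring; apply Rabs_triang).
    nra.
Qed.

End PuncturedLimit.

Section QuotientLimit.
Variables (u : R -> R) (y l r K : R).
Hypothesis Hr : 0 < r.
Hypothesis HK : 0 <= K.
Hypothesis Hquot : forall h, 0 < Rabs h <= r -> Rabs ((u (y + h) - u y) / h - l) <= K * Rabs h.

Lemma is_derive_of_quotient_bound : is_derive u y l.
Proof.
  apply is_derive_Reals. intros eps Heps.
  assert (Hd : 0 < Rmin r (eps / (K + 1))) by (apply Rmin_pos; [lra| apply Rdiv_lt_0_compat; lra]).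
  exists (mkposreal _ Hd). intros h Hh0 Hh. simpl in Hh.
  assert (H1 : Rmin r (eps / (K + 1)) <= r) by apply Rmin_l.
  assert (H2 : Rmin r (eps / (K + 1)) <= eps / (K + 1)) by apply Rmin_r.
  assert (H3 : 0 < Rabs h) by (apply Rabs_pos_lt; auto).
  specialize (Hquot h ltac:(lra)). eapply Rle_lt_trans; [apply Hquot|].
  assert ((K + 1) * (eps / (K + 1)) = eps) by (field; lra).
  nra.
Qed.

Lemma quotient_limit_le_lipschitz L : (forall x z, Rabs (u x - u z) <= L * Rabs (x - z)) ->
  Rabs l <= L.
Proof.
  intros HL. apply (Rle_plus_small _ _ r); auto. intros k Hk1 Hk2.
  set (t := Rmin r (k / (K + 1))).
  assert (Ht : 0 < t) by (apply Rmin_pos; [lra| apply Rdiv_lt_0_compat; lra]).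
  assert (Ht1 : t <= r) by apply Rmin_l. assert (Ht2 : t <= k / (K + 1)) by apply Rmin_r.
  assert (Ht3 : (K + 1) * (k / (K + 1)) = k) by (field; lra).
  specialize (Hquot t ltac:(rewrite Rabs_right; lra)). rewrite (Rabs_right t) in Hquot by lra.
  set (S := (u (y + t) - u y) / t) in *.
  assert (HSt : Rabs S <= L).
  { specialize (HL (y + t) y). replace (y + t - y) with t in HL by ring.
    rewrite (Rabs_right t) in HL by lra. apply Rabs_le_between in HL.
    apply Rabs_le. unfold S.
    split; apply (Rmult_le_reg_r t); auto;
      replace ((u (y + t) - u y) / t * t) with (u (y + t) - u y) by (field; lra); lra. }
  assert (Rabs l <= Rabs S + Rabs (S - l)).
  { replace l with (S - (S - l)) at 1 by ring. eapply Rle_trans; [apply Rabs_triang|].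
    rewrite Rabs_Ropp. lra. }
  assert (K * t <= k) by nra. lra.
Qed.

End QuotientLimit.

Section ViscositySolution.
Variables (kappa alpha0 alpha1 gamma eta : R) (a : R -> R) (H : R -> R -> R) (phat : R -> R).
Hypothesis Ha : a_assump kappa a.
Hypothesis HH : H_sqc alpha0 alpha1 gamma eta H phat.
Variables (lam0 : R) (u : R -> R) (L : R).
Hypothesis HL : forall x y, Rabs (u x - u y) <= L * Rabs (x - y).
Hypothesis Hsup : visc_super a H lam0 u.
Hypothesis Hsub : visc_sub a H lam0 u.

(* Where [a K] exceeds this bound, the equation forces [|u''| <= K] in the viscosity sense. *)
Let C0 := Rabs lam0 + / alpha0 + alpha1 * (pw L gamma + 1).

Lemma C0_nonneg : 0 <= C0.
Proof.
  assert (Ha0 : 0 < alpha0) by apply HH. assert (Ha1 : 0 < alpha1) by apply HH.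
  assert (0 <= pw L gamma) by apply pw_nonneg. assert (0 < / alpha0) by (apply Rinv_0_lt_compat; lra).
  assert (0 <= Rabs lam0) by apply Rabs_pos. unfold C0. nra.
Qed.

Section Semiconcavity.
Variables (y r K : R).
Hypothesis HaK : forall x, y - r <= x <= y + r -> C0 < a x * K.

Lemma semiconcave_near :
  three_point_convex (fun x => - u x + K / 2 * ((x - y) * (x - y))) (y - r) (y + r).
Proof.
  intros p q s Hp Hpq Hqs Hs. cbv beta.
  apply Rnot_lt_le. intro Hn.
  set (v := fun x => u x - K / 2 * ((x - y) * (x - y))).
  set (sg := (v s - v p) / (s - p)).
  set (al := v p - sg * p + K / 2 * (y * y)). set (be := sg - K * y). set (ga := K / 2).
  (* [quad al be ga] interpolates [u] at [p] and [s] and lies strictly above it at [q] *)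
  assert (Ep : u p - quad al be ga p = 0) by (unfold quad, al, be, ga, sg, v; field; lra).
  assert (Eq : u q - quad al be ga q < 0).
  { assert (E1 : u q - quad al be ga q = ((s - p) * v q - (s - q) * v p - (q - p) * v s) / (s - p))
      by (unfold quad, al, be, ga, sg, v; field; lra).
    rewrite E1. unfold Rdiv. assert (0 < / (s - p)) by (apply Rinv_0_lt_compat; lra).
    assert ((s - p) * v q - (s - q) * v p - (q - p) * v s < 0) by (unfold v; nra). nra. }
  assert (Es : u s - quad al be ga s = 0) by (unfold quad, al, be, ga, sg, v; field; lra).
  destruct (continuity_ab_min (fun x => u x - quad al be ga x) p s ltac:(lra)
    (fun c _ => continuity_pt_minus_quad u L HL al be ga c)) as [m [Hm1 Hm2]].
  assert (Hmq := Hm1 q ltac:(lra)). simpl in Hmq.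
  assert (Hmp : m <> p) by (intro; subst; lra). assert (Hms : m <> s) by (intro; subst; lra).
  assert (V := visc_super_at_min a H lam0 u al be ga p s m Hsup ltac:(lra) Hm1).
  assert (HmK := HaK m ltac:(lra)).
  assert (Hl := H_lower alpha0 alpha1 gamma eta H phat HH m (be + 2 * ga * m)).
  assert (lam0 <= Rabs lam0) by apply RRle_abs.
  assert (0 <= alpha1 * (pw L gamma + 1)).
  { assert (0 < alpha1) by apply HH. assert (0 <= pw L gamma) by apply pw_nonneg. nra. }
  replace (a m * (2 * ga)) with (a m * K) in V by (unfold ga; field).
  unfold C0 in HmK. lra.
Qed.

Lemma semiconvex_near :
  three_point_convex (fun x => u x + K / 2 * ((x - y) * (x - y))) (y - r) (y + r).
Proof.
  intros p q s Hp Hpq Hqs Hs. cbv beta.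
  apply Rnot_lt_le. intro Hn.
  set (w := fun x => u x + K / 2 * ((x - y) * (x - y))).
  set (sg := (w s - w p) / (s - p)).
  set (al := w p - sg * p - K / 2 * (y * y)). set (be := sg + K * y). set (ga := - (K / 2)).
  assert (Ep : u p - quad al be ga p = 0) by (unfold quad, al, be, ga, sg, w; field; lra).
  assert (Eq : 0 < u q - quad al be ga q).
  { assert (E1 : u q - quad al be ga q = ((s - p) * w q - (s - q) * w p - (q - p) * w s) / (s - p))
      by (unfold quad, al, be, ga, sg, w; field; lra).
    rewrite E1. apply Rdiv_lt_0_compat; unfold w; lra. }
  assert (Es : u s - quad al be ga s = 0) by (unfold quad, al, be, ga, sg, w; field; lra).
  destruct (continuity_ab_maj (fun x => u x - quad al be ga x) p s ltac:(lra)
    (fun c _ => continuity_pt_minus_quad u L HL al be ga c)) as [m [Hm1 Hm2]].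
  assert (Hmq := Hm1 q ltac:(lra)). simpl in Hmq.
  assert (Hmp : m <> p) by (intro; subst; lra). assert (Hms : m <> s) by (intro; subst; lra).
  assert (V := visc_sub_at_max a H lam0 u al be ga p s m Hsub ltac:(lra) Hm1).
  assert (Sl := lipschitz_slope_at_max u L HL al be ga p s m ltac:(lra) Hm1).
  assert (Hu := H_upper alpha0 alpha1 gamma eta H phat HH m (be + 2 * ga * m) L Sl).
  assert (HmK := HaK m ltac:(lra)).
  assert (- lam0 <= Rabs lam0) by (rewrite <- Rabs_Ropp; apply RRle_abs).
  assert (0 < / alpha0) by (apply Rinv_0_lt_compat; apply HH).
  replace (a m * (2 * ga)) with (- (a m * K)) in V by (unfold ga; field).
  unfold C0 in HmK. lra.
Qed.

End Semiconcavity.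

Lemma visc_sol_regular y : 0 < a y -> exists K r, 0 < r /\ 0 <= K /\
  is_derive u y (Derive u y) /\ Rabs (Derive u y) <= L /\
  forall h, 0 < Rabs h <= r -> Rabs ((u (y + h) - u y) / h - Derive u y) <= K * Rabs h.
Proof.
  intros Hy. assert (HC0 := C0_nonneg).
  set (K := 2 * C0 / a y + 1).
  assert (HK : C0 < a y / 2 * K).
  { unfold K. replace (a y / 2 * (2 * C0 / a y + 1)) with (C0 + a y / 2) by (field; lra). lra. }
  assert (HK0 : 0 <= K) by (unfold K; assert (0 <= 2 * C0 / a y) by (apply Rdiv_le_0_compat; lra); lra).
  set (r := a y / (2 * (2 * Rabs kappa + 1))).
  assert (Hr : 0 < r) by (unfold r; apply Rdiv_lt_0_compat; [lra| assert (Hk := Rabs_pos kappa); lra]).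
  assert (HaK : forall x, y - r <= x <= y + r -> C0 < a x * K).
  { intros x Hx. assert (a y / 2 <= a x) by (apply (a_ge_half kappa a Ha); apply Rabs_le; unfold r in *; lra).
    assert (a y / 2 * K <= a x * K) by (apply Rmult_le_compat_r; lra). lra. }
  destruct (lipschitz_punctured_limit (fun h => (u (y + h) - u y) / h) r (K / 2) Hr ltac:(lra)
    (difference_quotient_lipschitz u y r K (semiconvex_near y r K HaK) (semiconcave_near y r K HaK)))
    as [l Hl].
  assert (Hd := is_derive_of_quotient_bound u y l r (K / 2) Hr ltac:(lra) Hl).
  assert (Hl' : Derive u y = l) by (apply is_derive_unique; auto).
  exists (K / 2), r. rewrite Hl'. split; [|split; [|split; [|split]]]; auto; [lra|].
  apply (quotient_limit_le_lipschitz u y l r (K / 2) Hr ltac:(lra) Hl L HL).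
Qed.

Lemma penalized_min_point x0 e : 0 < e -> exists m, Rabs (m - x0) <= L * e /\
  a m * (- 2 / e) + H m (- 2 * (m - x0) / e) <= lam0.
Proof.
  intros He. assert (HL0 := lipschitz_const_nonneg u L HL).
  (* [u] is touched from below by [u(m) - ((x - x0)^2 - (m - x0)^2) / e] at a minimum [m] *)
  set (al := - (x0 * x0) / e). set (be := 2 * x0 / e). set (ga := - / e).
  assert (Hq : forall z, u z - quad al be ga z = u z + (z - x0) * (z - x0) / e)
    by (intros z; unfold quad, al, be, ga; field; lra).
  set (RR := L * e + 1).
  assert (HLe : 0 <= L * e) by (apply Rmult_le_pos; lra).
  destruct (continuity_ab_min (fun x => u x - quad al be ga x) (x0 - RR) (x0 + RR)
    ltac:(unfold RR; lra) (fun c _ => continuity_pt_minus_quad u L HL al be ga c)) as [m [Hm1 Hm2]].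
  assert (Hmx : Rabs (m - x0) <= L * e).
  { specialize (Hm1 x0 ltac:(unfold RR; lra)). simpl in Hm1. rewrite !Hq in Hm1.
    replace ((x0 - x0) * (x0 - x0) / e) with 0 in Hm1 by (field; lra).
    specialize (HL m x0). apply Rabs_le_between in HL.
    assert (Hsq : (m - x0) ^ 2 <= L * e * Rabs (m - x0)).
    { assert (Hd : (m - x0) * (m - x0) / e <= L * Rabs (m - x0)) by lra.
      apply (Rmult_le_compat_r e) in Hd; [|lra].
      replace ((m - x0) * (m - x0) / e * e) with ((m - x0) ^ 2) in Hd by (field; lra). lra. }
    rewrite <- Rabs_sqr in Hsq. assert (0 <= Rabs (m - x0)) by apply Rabs_pos. nra. }
  exists m. split; auto.
  apply Rabs_le_between in Hmx.
  assert (V := visc_super_at_min a H lam0 u al be ga (x0 - RR) (x0 + RR) m Hsup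
    ltac:(unfold RR; lra) Hm1).
  replace (be + 2 * ga * m) with (- 2 * (m - x0) / e) in V by (unfold be, ga; field; lra).
  replace (2 * ga) with (- 2 / e) in V by (unfold ga; field; lra).
  exact V.
Qed.

(* Letting [e -> 0] in the penalization: near a zero of [a] the diffusion term is
   O(e) and the slope stays bounded by [2 L]. *)
Lemma min_H_le_lambda0 x0 : a x0 = 0 -> H x0 (phat x0) <= lam0.
Proof.
  intros Hx0. assert (HL0 := lipschitz_const_nonneg u L HL). assert (Ha1 : 0 < alpha1) by apply HH.
  set (C3 := alpha1 * (pw (2 * L) gamma + 1)).
  assert (HC3 : 0 <= C3) by (unfold C3; assert (0 <= pw (2 * L) gamma) by apply pw_nonneg; nra).
  set (B := 2 * kappa ^ 2 * L ^ 2 + C3 * L + 1).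
  assert (HB : 0 < B).
  { assert (0 <= kappa ^ 2 * L ^ 2) by (apply Rmult_le_pos; apply pow2_ge_0). unfold B. nra. }
  apply Rle_plus_epsilon. intros k Hk.
  set (e := k / B). assert (He : 0 < e) by (apply Rdiv_lt_0_compat; lra).
  assert (HeB : e * B = k) by (unfold e; field; lra).
  destruct (penalized_min_point x0 e He) as [m [Hmx V]].
  set (p := - 2 * (m - x0) / e) in V.
  assert (Hp : Rabs p <= 2 * L).
  { unfold p, Rdiv. rewrite !Rabs_mult, Rabs_inv, (Rabs_right e), Rabs_left by lra.
    apply (Rmult_le_reg_r e); auto. field_simplify; lra. }
  assert (Ham : a m <= kappa ^ 2 * (L * e) ^ 2).
  { eapply Rle_trans; [apply (a_le_sq_dist_zero kappa a Ha m x0 Hx0)|].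
    apply Rmult_le_compat_l; [apply pow2_ge_0|]. rewrite <- (Rabs_sqr (m - x0)).
    assert (0 <= Rabs (m - x0)) by apply Rabs_pos. nra. }
  assert (H3 := H_x_lipschitz alpha0 alpha1 gamma eta H phat HH x0 m p (2 * L) Hp).
  fold C3 in H3. apply Rabs_le_between in H3.
  assert (Hmin := proj1 (proj2 (H_sqc_sharp alpha0 alpha1 gamma eta H phat HH x0)) p).
  assert (Hdiff : a m * (2 / e) <= 2 * kappa ^ 2 * L ^ 2 * e).
  { apply (Rmult_le_reg_r e); auto. replace (a m * (2 / e) * e) with (2 * a m) by (field; lra). nra. }
  assert (C3 * Rabs (x0 - m) <= C3 * (L * e)) by (apply Rmult_le_compat_l; [|rewrite Rabs_minus_sym]; auto).
  assert (2 * kappa ^ 2 * L ^ 2 * e + C3 * (L * e) <= k) by (rewrite <- HeB; unfold B; nra).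
  replace (a m * (-2 / e)) with (- (a m * (2 / e))) in V by (field; lra).
  lra.
Qed.

Lemma parabola_touch_below y ll c1 K : 0 < ll ->
  (exists z, y < z < y + ll /\ u z - u y - c1 * (z - y) + K / 2 * ((z - y) * (z - y)) < 0) ->
  0 < u (y + ll) - u y - c1 * ll + K / 2 * (ll * ll) ->
  exists m, y < m < y + ll /\ H m (c1 - K * (m - y)) <= lam0 + a m * K.
Proof.
  intros Hll [z [Hz Hneg]] Hpos.
  set (al := u y - c1 * y - K / 2 * (y * y)). set (be := c1 + K * y). set (ga := - (K / 2)).
  assert (Hpsi : forall x, u x - quad al be ga x = u x - u y - c1 * (x - y) + K / 2 * ((x - y) * (x - y)))
    by (intros x; unfold quad, al, be, ga; field).
  destruct (continuity_ab_min (fun x => u x - quad al be ga x) y (y + ll) ltac:(lra)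
    (fun c _ => continuity_pt_minus_quad u L HL al be ga c)) as [m [Hm1 Hm2]].
  assert (Hmz := Hm1 z ltac:(lra)). assert (Hml := Hm1 (y + ll) ltac:(lra)).
  cbv beta in Hmz, Hml. rewrite !Hpsi in Hmz, Hml. replace (y + ll - y) with ll in Hml by ring.
  assert (Hmy : m <> y) by (intro; subst m; rewrite Rminus_diag in Hmz; lra).
  assert (Hmy2 : m <> y + ll) by (intro E; rewrite E in Hmz; replace (y + ll - y) with ll in Hmz by ring; lra).
  assert (V := visc_super_at_min a H lam0 u al be ga y (y + ll) m Hsup ltac:(lra) Hm1).
  exists m. split; [lra|].
  replace (be + 2 * ga * m) with (c1 - K * (m - y)) in V by (unfold be, ga; field).
  replace (a m * (2 * ga)) with (- (a m * K)) in V by (unfold ga; field).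
  lra.
Qed.

(* If [u'(y) < c], the parabola with slope [(u'(y) + c)/2] at [y] and curvature [-K] dips above
   [u] just right of [y] and, [K] being large, is below [u] at [y + ll]. *)
Lemma concave_barrier_touch y ll c : 0 < a y -> Derive u y < c -> 0 < ll ->
  exists m p, y < m < y + ll /\ Rabs p <= Rabs c + 3 * L + 2 /\ p < c /\
    H m p <= lam0 + a m * (2 * (Rabs c + L + 1)) / ll.
Proof.
  intros Hy Hlc Hll. assert (HL0 := lipschitz_const_nonneg u L HL).
  destruct (visc_sol_regular y Hy) as [Kr [rr [Hrr [HKr [_ [Hlb Hquot]]]]]].
  set (l := Derive u y) in *. apply Rabs_le_between in Hlb.
  set (c1 := (l + c) / 2).
  set (K := 2 * (c1 + L + 1) / ll).
  assert (HK : 0 < K) by (unfold K, c1; apply Rdiv_lt_0_compat; lra).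
  assert (HKll : K * ll = 2 * (c1 + L + 1)) by (unfold K; field; lra).
  destruct (parabola_touch_below y ll c1 K Hll) as [m [Hm Hhm]].
  - set (h := Rmin (Rmin (ll / 2) rr) ((c - l) / (4 * (Kr + K / 2 + 1)))).
    assert (Hh1 : 0 < h) by (unfold h; repeat apply Rmin_pos; try apply Rdiv_lt_0_compat; lra).
    assert (Hh2 : h <= ll / 2) by (unfold h; eapply Rle_trans; [apply Rmin_l| apply Rmin_l]).
    assert (Hh3 : h <= rr) by (unfold h; eapply Rle_trans; [apply Rmin_l| apply Rmin_r]).
    assert (Hh5 : (Kr + K / 2) * h <= (c - l) / 4).
    { assert (Hh4 : h <= (c - l) / (4 * (Kr + K / 2 + 1))) by (unfold h; apply Rmin_r).
      apply (Rmult_le_compat_l (Kr + K / 2 + 1)) in Hh4; [|lra].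
      replace ((Kr + K / 2 + 1) * ((c - l) / (4 * (Kr + K / 2 + 1)))) with ((c - l) / 4) in Hh4
        by (field; lra).
      nra. }
    exists (y + h). split; [lra|].
    specialize (Hquot h ltac:(rewrite Rabs_right; lra)).
    rewrite (Rabs_right h) in Hquot by lra. apply Rabs_le_between in Hquot.
    replace (u (y + h) - u y) with (h * ((u (y + h) - u y) / h)) by (field; lra).
    replace (y + h - y) with h by ring. unfold c1. nra.
  - specialize (HL (y + ll) y). replace (y + ll - y) with ll in HL by ring.
    rewrite (Rabs_right ll) in HL by lra. apply Rabs_le_between in HL.
    assert (K / 2 * (ll * ll) = (c1 + L + 1) * ll)
      by (replace (K / 2 * (ll * ll)) with (K * ll * ll / 2) by field; rewrite HKll; field).
    nra.
  - exists m, (c1 - K * (m - y)). split; [lra|].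
    assert (Hp1 : c1 - K * ll <= c1 - K * (m - y) <= c1).
    { split; [|nra]. assert (K * (m - y) <= K * ll) by (apply Rmult_le_compat_l; lra). lra. }
    rewrite HKll in Hp1. assert (Hcc := Rabs_bounds c). assert (Hc1 : c1 < c) by (unfold c1; lra).
    split; [apply Rabs_le; unfold c1 in *; lra| split; [lra|]].
    assert (a m * K <= a m * (2 * (Rabs c + L + 1)) / ll); [|lra].
    replace (a m * (2 * (Rabs c + L + 1)) / ll) with (a m * (2 * (Rabs c + L + 1) / ll)) by (field; lra).
    apply Rmult_le_compat_l; [apply (a_nonneg kappa a Ha)|].
    unfold K, Rdiv. apply Rmult_le_compat_r; [left; apply Rinv_0_lt_compat; lra|]. unfold c1. lra.
Qed.

Lemma derivative_lower_bound_near x0 c mu : a x0 = 0 -> lam0 < mu ->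
  (forall p, p < c -> mu < H x0 p) ->
  exists r, 0 < r /\ forall y, 0 < a y -> Rabs (y - x0) < r -> c <= Derive u y.
Proof.
  intros Hx0 Hmu Hc.
  assert (HL0 := lipschitz_const_nonneg u L HL). assert (Ha1 : 0 < alpha1) by apply HH.
  set (Rc := Rabs c + 3 * L + 2).
  set (C3 := alpha1 * (pw Rc gamma + 1)).
  assert (HC3 : 0 <= C3) by (unfold C3; assert (0 <= pw Rc gamma) by apply pw_nonneg; nra).
  set (D := 2 * C3 + 8 * kappa ^ 2 * (Rabs c + L + 1)).
  assert (HD : 0 <= D).
  { assert (0 <= Rabs c) by apply Rabs_pos. assert (0 <= kappa ^ 2) by apply pow2_ge_0. unfold D. nra. }
  set (r := (mu - lam0) / (2 * D + 1)).
  assert (Hr : 0 < r) by (apply Rdiv_lt_0_compat; lra).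
  assert (HrD : r * D <= (mu - lam0) / 2).
  { unfold r. apply (Rmult_le_reg_r (2 * D + 1)); [lra|].
    replace ((mu - lam0) / (2 * D + 1) * D * (2 * D + 1)) with ((mu - lam0) * D) by (field; lra).
    nra. }
  exists r. split; auto. intros y Hy Hyr.
  apply Rnot_lt_le. intro Hlc.
  destruct (positivity_interval_right a (2 * Rabs kappa) (kappa ^ 2) (a_nonneg kappa a Ha)
    (a_lipschitz kappa a Ha) (a_le_sq_dist_zero kappa a Ha) x0 y Hx0 Hy) as [ll [Hll1 [Hll2 Hll3]]].
  destruct (concave_barrier_touch y ll c Hy Hlc Hll1) as [m [p [Hm [Hpb [Hpc Hhm]]]]].
  assert (Ham : a m <= 4 * kappa ^ 2 * ll ^ 2) by (apply Hll3; lra).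
  assert (Hdiff : a m * (2 * (Rabs c + L + 1)) / ll <= 8 * kappa ^ 2 * r * (Rabs c + L + 1)).
  { apply (Rmult_le_reg_r ll); [lra|].
    replace (a m * (2 * (Rabs c + L + 1)) / ll * ll) with (a m * (2 * (Rabs c + L + 1))) by (field; lra).
    assert (0 <= Rabs c) by apply Rabs_pos. assert (0 <= kappa ^ 2) by apply pow2_ge_0.
    assert (a m * (2 * (Rabs c + L + 1)) <= 4 * kappa ^ 2 * ll ^ 2 * (2 * (Rabs c + L + 1)))
      by (apply Rmult_le_compat_r; lra).
    assert (0 <= 8 * kappa ^ 2 * (Rabs c + L + 1) * ll * (r - ll))
      by (apply Rmult_le_pos; [apply Rmult_le_pos; [apply Rmult_le_pos|]|]; lra).
    nra. }
  assert (Hmx : Rabs (m - x0) <= 2 * r).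
  { replace (m - x0) with ((m - y) + (y - x0)) by ring. eapply Rle_trans; [apply Rabs_triang|].
    rewrite Rabs_right by lra. lra. }
  assert (H3 := H_x_lipschitz alpha0 alpha1 gamma eta H phat HH m x0 p Rc Hpb).
  fold C3 in H3. apply Rabs_le_between in H3.
  assert (C3 * Rabs (m - x0) <= C3 * (2 * r)) by (apply Rmult_le_compat_l; auto).
  specialize (Hc p Hpc). unfold D in HrD. nra.
Qed.

End ViscositySolution.

Lemma continuity_pt_le_of_right g t d B : 0 < d -> continuity_pt g t ->
  (forall x, t < x < t + d -> g x <= B) -> g t <= B.
Proof.
  intros Hd Hc Hright. apply Rnot_lt_le. intro Hlt.
  destruct (proj1 (continuity_pt_locally g t) Hc (mkposreal _ (proj2 (Rlt_0_minus _ _) Hlt))) as [del Hdel].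
  set (x := t + Rmin d del / 2).
  assert (Hm : 0 < Rmin d del) by (apply Rmin_pos; [lra| apply cond_pos]).
  assert (Hm1 := Rmin_l d del). assert (Hm2 := Rmin_r d del).
  assert (Hb : ball t del x) by (apply ball_R; unfold x; rewrite Rabs_right; lra).
  specialize (Hdel x Hb). simpl in Hdel. apply Rabs_def2 in Hdel.
  specialize (Hright x ltac:(unfold x; lra)). lra.
Qed.

Lemma continuity_pt_ge_of_left g t c : continuity_pt g t ->
  (forall e, 0 < e -> exists x, t - e < x <= t /\ c <= g x) -> c <= g t.
Proof.
  intros Hc Hleft. apply Rnot_lt_le. intro Hlt.
  destruct (proj1 (continuity_pt_locally g t) Hc (mkposreal _ (proj2 (Rlt_0_minus _ _) Hlt))) as [del Hdel].
  destruct (Hleft del (cond_pos del)) as [x [Hx Hcx]].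
  assert (Hb : ball t del x) by (apply ball_R; rewrite Rabs_left1; lra).
  specialize (Hdel x Hb). simpl in Hdel. apply Rabs_def2 in Hdel. lra.
Qed.

Lemma mvt_lower_bound g x1 x2 k : x1 <= x2 ->
  (forall x, x1 <= x <= x2 -> ex_derive g x /\ k <= Derive g x) ->
  (forall x, x1 <= x <= x2 -> continuity_pt g x) ->
  k * (x2 - x1) <= g x2 - g x1.
Proof.
  intros H12 Hd Hc.
  destruct (MVT_gen g x1 x2 (Derive g)) as [c [Hc1 Hc2]].
  - intros x Hx. rewrite Rmin_left, Rmax_right in Hx by lra. apply Derive_correct, Hd. lra.
  - intros x Hx. rewrite Rmin_left, Rmax_right in Hx by lra. auto.
  - rewrite Rmin_left, Rmax_right in Hc1 by lra. rewrite Hc2. destruct (Hd c Hc1) as [_ Hk]. nra.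
Qed.

Section Comparison.
Variables (g : R -> R) (s y c k : R).
Hypothesis Hsy : s <= y.
Hypothesis Hgy : g y < c.
Hypothesis Hk : 0 <= k.
Hypothesis Hcont : forall x, s <= x <= y -> continuity_pt g x.
Hypothesis Hder : forall x, s <= x <= y -> g x <= c -> ex_derive g x /\ k <= Derive g x.

(* Going left from [y], [g] cannot come back up to [c]: just after the last point where it
   did, [g] would be nondecreasing and below [g y < c]. *)
Lemma stays_below_left x : s <= x <= y -> g x < c.
Proof.
  intros Hx. apply Rnot_le_lt. intro Hcx.
  set (T := fun t => s <= t <= y /\ c <= g t).
  assert (Tb : bound T) by (exists y; intros t [Ht _]; lra).
  destruct (completeness T Tb (ex_intro _ x (conj Hx Hcx))) as [ts [Hub Hlub]].
  assert (Hts1 : s <= ts) by (apply Rle_trans with x; [lra| apply Hub; split; auto]).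
  assert (Hts2 : ts <= y) by (apply Hlub; intros t [Ht _]; lra).
  assert (Hcts : c <= g ts).
  { apply continuity_pt_ge_of_left; [apply Hcont; lra|]. intros e He. apply NNPP. intro Hn.
    assert (ts <= ts - e); [|lra]. apply Hlub. intros t Tt. apply Rnot_lt_le. intro Ht.
    apply Hn. exists t. split; [split; [lra| apply Hub; auto]| apply Tt]. }
  assert (Htsy : ts < y) by (destruct (Req_dec ts y); [subst; lra| lra]).
  assert (Habove : forall x, ts < x <= y -> g x < c).
  { intros z Hz. apply Rnot_le_lt. intro Hz'. assert (z <= ts) by (apply Hub; split; [lra| auto]). lra. }
  assert (Hle : forall x, ts < x < ts + (y - ts) -> g x <= g y).
  { intros z Hz. assert (k * (y - z) <= g y - g z); [|nra].
    apply mvt_lower_bound; [lra| |intros; apply Hcont; lra].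
    intros w Hw. apply Hder; [lra| left; apply Habove; lra]. }
  assert (g ts <= g y) by (apply (continuity_pt_le_of_right g ts (y - ts)); [lra| apply Hcont; lra| auto]).
  lra.
Qed.

Lemma drop_left : g s <= g y - k * (y - s).
Proof.
  assert (k * (y - s) <= g y - g s); [|lra].
  apply mvt_lower_bound; auto.
  intros x Hx. apply Hder; [auto| left; apply stays_below_left; auto].
Qed.

End Comparison.

Lemma bounded_barrier_length g s y c d B M : s <= y -> g y < c -> 0 < d -> 0 < B ->
  (forall x, s <= x <= y -> continuity_pt g x) ->
  (forall x, s <= x <= y -> g x <= c -> ex_derive g x /\ d <= B * Derive g x) ->
  Rabs (g s) <= M -> Rabs (g y) <= M -> d * (y - s) <= 2 * M * B.
Proof.
  intros Hsy Hgy Hd HB Hcont Hder Hgs Hgy'.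
  assert (Hk : 0 <= d / B) by (apply Rdiv_le_0_compat; lra).
  assert (Hdrop := drop_left g s y c (d / B) Hsy Hgy Hk Hcont).
  assert (g s <= g y - d / B * (y - s)).
  { apply Hdrop. intros x Hx Hgx. destruct (Hder x Hx Hgx) as [He Hdx]. split; auto.
    apply (Rmult_le_reg_l B); auto. replace (B * (d / B)) with d by (field; lra). lra. }
  apply Rabs_le_between in Hgs. apply Rabs_le_between in Hgy'.
  apply (Rmult_le_reg_r (/ B)); [apply Rinv_0_lt_compat; lra|].
  replace (2 * M * B * / B) with (2 * M) by (field; lra).
  replace (d * (y - s) * / B) with (d / B * (y - s)) by (field; lra).
  lra.
Qed.

Lemma small_radius d C : 0 < d -> 0 <= C -> exists r, 0 < r /\ C * r < d.
Proof.
  intros Hd HC. exists (d / (C + 1)). split; [apply Rdiv_lt_0_compat; lra|].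
  apply (Rmult_lt_reg_r (C + 1)); [lra|].
  replace (C * (d / (C + 1)) * (C + 1)) with (C * d) by (field; lra). nra.
Qed.

Section NearZero.
Variables (kappa alpha0 alpha1 gamma eta : R) (a : R -> R) (H : R -> R -> R) (phat : R -> R).
Hypothesis Ha : a_assump kappa a.
Hypothesis HH : H_sqc alpha0 alpha1 gamma eta H phat.
Variables (x0 : R).
Hypothesis Hx0 : a x0 = 0.

(* Since [a <= kappa^2 (x - x0)^2], a lower bound [d] on [a g'] near [x0] makes a bounded
   [g] increase too fast on the interval of [A] just left of [y]. *)
Lemma near_zero_barrier (g : R -> R) (M d c r y : R) :
  (forall x, 0 < a x -> ex_derive g x) ->
  (forall x, 0 < a x -> Rabs (g x) <= M) -> 0 < d ->
  (forall x, 0 < a x -> Rabs (x - x0) < 2 * r -> g x <= c -> d <= a x * Derive g x) ->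
  0 < a y -> Rabs (y - x0) < r -> g y < c -> d <= 8 * kappa ^ 2 * M * r.
Proof.
  intros Hder Hbnd Hd Hgap Hy Hyr Hgy.
  destruct (positivity_interval_left a (2 * Rabs kappa) (kappa ^ 2) x0 y (a_nonneg kappa a Ha)
    (a_lipschitz kappa a Ha) (a_le_sq_dist_zero kappa a Ha) Hx0 Hy) as [ll [Hll1 [Hll2 Hll3]]].
  set (B := 4 * kappa ^ 2 * ll ^ 2).
  assert (HB : 0 < B) by (destruct (Hll3 y ltac:(lra)); unfold B; lra).
  assert (Hlen := bounded_barrier_length g (y - ll) y c d B M ltac:(lra) Hgy Hd HB).
  assert (Hdll : d * (y - (y - ll)) <= 2 * M * B).
  { apply Hlen.
    - intros x Hx. destruct (Hder x (proj1 (Hll3 x Hx))) as [l Hl].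
      apply derivable_continuous_pt. exists l. apply is_derive_Reals; auto.
    - intros x Hx Hgx. destruct (Hll3 x Hx) as [Hax HaB]. split; [apply Hder; auto|].
      assert (Hxr : Rabs (x - x0) < 2 * r).
      { replace (x - x0) with ((x - y) + (y - x0)) by ring. eapply Rle_lt_trans; [apply Rabs_triang|].
        rewrite Rabs_left1 by lra. lra. }
      specialize (Hgap x Hax Hxr Hgx).
      assert (0 < Derive g x) by (apply Rnot_le_lt; intro; nra).
      fold B in HaB. nra.
    - apply Hbnd, Hll3. lra.
    - apply Hbnd, Hy. }
  replace (y - (y - ll)) with ll in Hdll by ring. unfold B in Hdll.
  assert (d <= 8 * kappa ^ 2 * M * ll).
  { apply (Rmult_le_reg_r ll); auto. nra. }
  assert (0 <= 8 * kappa ^ 2 * M).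
  { assert (HM := Hbnd y Hy). assert (0 <= Rabs (g y)) by apply Rabs_pos.
    assert (0 <= kappa ^ 2) by apply pow2_ge_0. nra. }
  assert (8 * kappa ^ 2 * M * ll <= 8 * kappa ^ 2 * M * r) by (apply Rmult_le_compat_l; lra).
  lra.
Qed.

Variables (lam : R) (f : R -> R) (M : R).
Hypothesis Hf1 : forall x, 0 < a x -> ex_derive f x.
Hypothesis HM0 : 0 <= M.
Hypothesis HM : forall x, 0 < a x -> Rabs (f x) <= M.
Hypothesis Hfeq : forall x, 0 < a x -> a x * Derive f x + H x (f x) = lam.
Hypothesis Hmin : H x0 (phat x0) <= lam.

Let h := H x0.
Let Hg := H_sqc_sharp alpha0 alpha1 gamma eta H phat HH x0.
Let C3 := alpha1 * (pw M gamma + 1).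

Lemma C3_nonneg : 0 <= C3.
Proof.
  assert (0 < alpha1) by apply HH. assert (0 <= pw M gamma) by apply pw_nonneg. unfold C3. nra.
Qed.

Lemma H_near_x0 x r : 0 < a x -> Rabs (x - x0) < 2 * r ->
  H x (f x) - 2 * C3 * r <= h (f x) <= H x (f x) + 2 * C3 * r.
Proof.
  intros Hx Hxr. assert (HC := C3_nonneg).
  assert (Hl := H_x_lipschitz alpha0 alpha1 gamma eta H phat HH x x0 (f x) M (HM x Hx)).
  fold C3 in Hl. apply Rabs_le_between in Hl.
  assert (C3 * Rabs (x - x0) <= C3 * (2 * r)) by (apply Rmult_le_compat_l; lra).
  unfold h. lra.
Qed.

Lemma barrier_radius d : 0 < d ->
  exists r, 0 < r /\ 2 * C3 * r < d / 2 /\ 8 * kappa ^ 2 * M * r < d / 2.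
Proof.
  intros Hd. assert (HC := C3_nonneg).
  assert (HK : 0 <= 8 * kappa ^ 2 * M) by (assert (0 <= kappa ^ 2) by apply pow2_ge_0; nra).
  destruct (small_radius (d / 2) (2 * C3 + 8 * kappa ^ 2 * M)) as [r [Hr Hrd]]; [lra| lra|].
  exists r. split; auto.
  assert (0 <= 2 * C3 * r) by (apply Rmult_le_pos; lra).
  assert (0 <= 8 * kappa ^ 2 * M * r) by (apply Rmult_le_pos; lra).
  split; lra.
Qed.

Lemma f_upper_near e : 0 < e -> exists r, 0 < r /\
  forall y, 0 < a y -> Rabs (y - x0) < r -> f y < sublevel_sup h lam + e.
Proof.
  intros He. assert (Het : 0 < eta) by apply Hg.
  set (P := sublevel_sup h lam). set (d := eta * e / 8).
  assert (Hd : 0 < d) by (unfold d; nra).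
  destruct (barrier_radius d Hd) as [r [Hr [Hr1 Hr2]]].
  exists r. split; auto. intros y Hy Hyr. apply Rnot_le_lt. intro Hfy.
  assert (d <= 8 * kappa ^ 2 * M * r); [|lra].
  apply (near_zero_barrier (fun x => - f x) M d (- (P + e / 2)) r y); auto; try lra.
  - intros x Hx. apply (ex_derive_opp f x), Hf1, Hx.
  - intros x Hx. rewrite Rabs_Ropp. auto.
  - intros x Hx Hxr Hfx. rewrite Derive_opp.
    assert (Hup := above_sublevel_sup h (phat x0) eta Hg lam Hmin (f x) (e / 2) ltac:(lra) ltac:(fold P; lra)).
    assert (Hnear := H_near_x0 x r Hx Hxr). specialize (Hfeq x Hx).
    unfold d in *. lra.
Qed.

Section LowerBarrier.
Variables (Pmu rC : R).
Hypothesis HPmu : sublevel_inf h lam < Pmu.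
Hypothesis HrC : 0 < rC.
Hypothesis HfC : forall y, 0 < a y -> Rabs (y - x0) < rC -> Pmu <= f y.

Lemma f_lower_near e : 0 < e -> exists r, 0 < r /\
  forall y, 0 < a y -> Rabs (y - x0) < r -> sublevel_sup h lam - e < f y.
Proof.
  intros He. assert (Het : 0 < eta) by apply Hg.
  set (P := sublevel_sup h lam). set (Pm := sublevel_inf h lam) in *.
  set (gap := Rmin (Pmu - Pm) (e / 2)).
  assert (Hgap : 0 < gap) by (apply Rmin_pos; lra).
  set (d := eta * gap / 4).
  assert (Hd : 0 < d) by (unfold d; nra).
  destruct (barrier_radius d Hd) as [r1 [Hr1 [Hr1a Hr1b]]].
  set (r := Rmin r1 (rC / 2)).
  assert (Hr : 0 < r) by (apply Rmin_pos; lra).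
  assert (Hrr1 : r <= r1) by apply Rmin_l. assert (Hrc : r <= rC / 2) by apply Rmin_r.
  exists r. split; auto. intros y Hy Hyr. apply Rnot_le_lt. intro Hfy.
  assert (d <= 8 * kappa ^ 2 * M * r).
  { apply (near_zero_barrier f M d (P - e / 2) r y); auto; try lra.
    intros x Hx Hxr Hfx.
    assert (HfPmu := HfC x Hx ltac:(lra)).
    assert (Hin := sublevel_interior_gap h (phat x0) eta Hg lam (f x) (Pmu - Pm) (e / 2) Hmin
      ltac:(lra) ltac:(lra) ltac:(fold Pm; lra) ltac:(fold P; lra)).
    fold gap in Hin.
    assert (Hnear := H_near_x0 x r Hx Hxr). specialize (Hfeq x Hx).
    assert (2 * C3 * r <= 2 * C3 * r1) by (apply Rmult_le_compat_l; assert (HC := C3_nonneg); lra).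
    unfold d in *. lra. }
  assert (8 * kappa ^ 2 * M * r <= 8 * kappa ^ 2 * M * r1).
  { apply Rmult_le_compat_l; auto. assert (0 <= kappa ^ 2) by apply pow2_ge_0. nra. }
  lra.
Qed.

Lemma f_tends_to_sublevel_sup : filterlim f (near_in_A a x0) (locally (sublevel_sup h lam)).
Proof.
  apply filterlim_locally. intros [e He].
  destruct (f_upper_near e He) as [r1 [Hr1 Hup]].
  destruct (f_lower_near e He) as [r2 [Hr2 Hlow]].
  exists (mkposreal _ (Rmin_pos _ _ Hr1 Hr2)). intros y Hyb Hy.
  apply ball_R in Hyb. change (Rabs (y - x0) < Rmin r1 r2) in Hyb. assert (Hm1 := Rmin_l r1 r2). assert (Hm2 := Rmin_r r1 r2).
  apply ball_R. simpl pos. apply Rabs_def1.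
  - specialize (Hup y Hy ltac:(lra)). lra.
  - specialize (Hlow y Hy ltac:(lra)). lra.
Qed.

End LowerBarrier.

End NearZero.

Lemma above_solution_limit (kappa alpha0 alpha1 gamma eta : R) (a : R -> R) (H : R -> R -> R)
  (phat : R -> R) (lam0 lam x0 : R) (f u : R -> R) (L : R) :
  a_assump kappa a -> H_sqc alpha0 alpha1 gamma eta H phat -> lam0 < lam -> a x0 = 0 ->
  (forall x, 0 < a x -> ex_derive f x) ->
  (exists M, forall x, 0 < a x -> Rabs (f x) <= M) ->
  (forall x, 0 < a x -> a x * Derive f x + H x (f x) = lam) ->
  (forall x y, Rabs (u x - u y) <= L * Rabs (x - y)) ->
  visc_super a H lam0 u -> visc_sub a H lam0 u ->
  (forall x, 0 < a x -> f x >= Derive u x) ->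
  filterlim f (near_in_A a x0) (locally (pplus H lam x0)).
Proof.
  intros Ha HH Hlam Hx0 Hf1 [M HM] Hfeq HL Hsup Hsub Hge.
  assert (Hmin := min_H_le_lambda0 kappa alpha0 alpha1 gamma eta a H phat Ha HH lam0 u L HL Hsup x0 Hx0).
  assert (Hg := H_sqc_sharp alpha0 alpha1 gamma eta H phat HH x0).
  (* between [lam0] and [lam], [u' >= p^-_mu(x0) > p^-_lam(x0)] keeps [f] off the lower branch *)
  set (mu := (lam0 + lam) / 2).
  set (Pmu := sublevel_inf (H x0) mu).
  destruct (derivative_lower_bound_near kappa alpha0 alpha1 gamma eta a H phat Ha HH lam0 u L HL
    Hsup Hsub x0 Pmu mu Hx0 ltac:(unfold mu; lra)) as [rC [HrC HC]].
  { intros p Hp. apply (lt_sublevel_inf (H x0) (phat x0) eta Hg); auto. unfold mu; lra. }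
  apply (f_tends_to_sublevel_sup kappa alpha0 alpha1 gamma eta a H phat Ha HH x0 Hx0 lam f (Rabs M))
    with (Pmu := Pmu) (rC := rC); auto.
  - apply Rabs_pos.
  - intros x Hx. eapply Rle_trans; [apply HM, Hx| apply RRle_abs].
  - lra.
  - apply (sublevel_inf_lt (H x0) (phat x0) eta Hg); unfold mu; lra.
  - intros y Hy Hyr. specialize (HC y Hy Hyr). specialize (Hge y Hy). lra.
Qed.

Lemma ex_derive_comp_opp (g : R -> R) z : ex_derive g (- z) -> ex_derive (fun y => g (- y)) z.
Proof. intros Hg. apply (ex_derive_comp g (fun y => - y)); auto. auto_derive; auto. Qed.

Lemma Derive_comp_opp (g : R -> R) z : ex_derive g (- z) ->
  Derive (fun y => g (- y)) z = - Derive g (- z).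
Proof.
  intros Hg. rewrite (Derive_comp g (fun y => - y)); auto; [|auto_derive; auto].
  replace (Derive (fun y => - y) z) with (-1); [ring|].
  symmetry; apply is_derive_unique. auto_derive; auto.
Qed.

Lemma continuous_comp_opp (g : R -> R) z : continuous g (- z) -> continuous (fun y => g (- y)) z.
Proof.
  intros Hg. apply (continuous_comp (fun y => - y) g); auto.
  apply (continuous_opp (fun y : R => y)), continuous_id.
Qed.

Lemma C2_comp_opp (phi : R -> R) : C2 phi ->
  C2 (fun y => phi (- y)) /\
  (forall z, Derive (fun y => phi (- y)) z = - Derive phi (- z)) /\
  (forall z, Derive (Derive (fun y => phi (- y))) z = Derive (Derive phi) (- z)).
Proof.
  intros [H1 [H2 H3]].
  assert (D1 : forall z, Derive (fun y => phi (- y)) z = - Derive phi (- z))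
    by (intros; apply Derive_comp_opp; auto).
  assert (D2 : forall z, Derive (Derive (fun y => phi (- y))) z = Derive (Derive phi) (- z)).
  { intros z. rewrite (Derive_ext _ (fun z => - Derive phi (- z))) by auto.
    rewrite Derive_opp, Derive_comp_opp by auto. ring. }
  split; [|split; auto]. split; [|split].
  - intros z; apply ex_derive_comp_opp; auto.
  - intros z. apply (ex_derive_ext (fun z => - Derive phi (- z))); [intros; symmetry; auto|].
    apply (ex_derive_opp (fun z => Derive phi (- z))), ex_derive_comp_opp; auto.
  - intros z. apply (continuous_ext (fun z => Derive (Derive phi) (- z))); [intros; symmetry; auto|].
    apply continuous_comp_opp; auto.
Qed.

Lemma touches_below_comp_opp phi u x1 :
  touches_below phi (fun x => u (- x)) x1 -> touches_below (fun y => phi (- y)) u (- x1).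
Proof.
  intros [Ht [d [Hd Hle]]]. split; [rewrite Ropp_involutive; auto|].
  exists d. split; auto. intros y Hy. specialize (Hle (- y)). rewrite Ropp_involutive in Hle.
  apply Hle. replace (- y - x1) with (- (y - - x1)) by ring. rewrite Rabs_Ropp; auto.
Qed.

Lemma touches_above_comp_opp phi u x1 :
  touches_above phi (fun x => u (- x)) x1 -> touches_above (fun y => phi (- y)) u (- x1).
Proof.
  intros [Ht [d [Hd Hle]]]. split; [rewrite Ropp_involutive; auto|].
  exists d. split; auto. intros y Hy. specialize (Hle (- y)). rewrite Ropp_involutive in Hle.
  apply Hle. replace (- y - x1) with (- (y - - x1)) by ring. rewrite Rabs_Ropp; auto.
Qed.

Section Reflection.
Variables (kappa alpha0 alpha1 gamma eta : R) (a : R -> R) (H : R -> R -> R) (phat : R -> R).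
Let a' := fun x => a (- x).
Let H' := fun x p => H (- x) (- p).
Let phat' := fun x => - phat (- x).

Lemma a_assump_reflect : a_assump kappa a -> a_assump kappa a'.
Proof.
  intros [Hbnd Hlip]. split; [intros; apply Hbnd|]. intros x y. unfold a'.
  replace (x - y) with (- (- x - - y)) by ring. rewrite Rabs_Ropp. apply Hlip.
Qed.

Lemma H_sqc_reflect : H_sqc alpha0 alpha1 gamma eta H phat -> H_sqc alpha0 alpha1 gamma eta H' phat'.
Proof.
  intros [Ha0 [Ha1 [Hg [He [HH1 [HH2 [HH3 [Hqc [Hm [Hdec Hinc]]]]]]]]]].
  unfold H', phat'. do 4 (split; auto). split; [|split; [|split; [|split; [|split; [|split]]]]].
  - intros x p. rewrite <- (Rabs_Ropp p). apply HH1.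
  - intros x p q. replace (p - q) with (- (- p - - q)) by ring. rewrite Rabs_Ropp.
    rewrite <- (Rabs_Ropp p), <- (Rabs_Ropp q). apply HH2.
  - intros x y p. replace (x - y) with (- (- x - - y)) by ring. rewrite Rabs_Ropp.
    rewrite <- (Rabs_Ropp p). apply HH3.
  - intros x p q t Hpq Ht.
    replace (- (t * p + (1 - t) * q)) with (t * (- p) + (1 - t) * (- q)) by ring.
    apply Hqc; auto. intro; apply Hpq; lra.
  - intros x p Hp. rewrite Ropp_involutive. apply Hm. intro; apply Hp; lra.
  - intros x p1 p2 Hp. specialize (Hinc (- x) (- p2) (- p1) ltac:(lra)).
    replace (p1 - p2) with (- p2 - - p1) by ring. lra.
  - intros x p1 p2 Hp. specialize (Hdec (- x) (- p2) (- p1) ltac:(lra)).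
    replace (p1 - p2) with (- p2 - - p1) by ring. lra.
Qed.

Lemma visc_super_reflect lam0 u : visc_super a H lam0 u -> visc_super a' H' lam0 (fun x => u (- x)).
Proof.
  intros [Hc Hs]. split; [intros x; apply continuous_comp_opp, Hc|].
  intros phi x1 HC Ht. destruct (C2_comp_opp phi HC) as [HC' [D1 D2]].
  specialize (Hs _ _ HC' (touches_below_comp_opp phi u x1 Ht)).
  rewrite D1, D2, Ropp_involutive in Hs. exact Hs.
Qed.

Lemma visc_sub_reflect lam0 u : visc_sub a H lam0 u -> visc_sub a' H' lam0 (fun x => u (- x)).
Proof.
  intros [Hc Hs]. split; [intros x; apply continuous_comp_opp, Hc|].
  intros phi x1 HC Ht. destruct (C2_comp_opp phi HC) as [HC' [D1 D2]].
  specialize (Hs _ _ HC' (touches_above_comp_opp phi u x1 Ht)).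
  rewrite D1, D2, Ropp_involutive in Hs. exact Hs.
Qed.

Lemma filterlim_reflect (f : R -> R) x0 S :
  filterlim (fun x => - f (- x)) (near_in_A a' (- x0)) (locally S) ->
  filterlim f (near_in_A a x0) (locally (- S)).
Proof.
  intros Hl. apply filterlim_locally. intros eps. apply filterlim_locally with (eps := eps) in Hl.
  destruct Hl as [d Hd]. exists d. intros y Hy Hay. apply ball_R in Hy.
  specialize (Hd (- y)). unfold a' in Hd. rewrite Ropp_involutive in Hd.
  assert (Hb : ball (- x0) d (- y)).
  { apply ball_R. replace (- y - - x0) with (- (y - x0)) by ring. rewrite Rabs_Ropp; auto. }
  specialize (Hd Hb Hay). apply ball_R in Hd. apply ball_R.
  replace (f y - - S) with (- (- f y - S)) by ring. rewrite Rabs_Ropp; auto.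
Qed.

End Reflection.

Lemma below_solution_limit (kappa alpha0 alpha1 gamma eta : R) (a : R -> R) (H : R -> R -> R)
  (phat : R -> R) (lam0 lam x0 : R) (f u : R -> R) (L : R) :
  a_assump kappa a -> H_sqc alpha0 alpha1 gamma eta H phat -> lam0 < lam -> a x0 = 0 ->
  (forall x, 0 < a x -> ex_derive f x) ->
  (exists M, forall x, 0 < a x -> Rabs (f x) <= M) ->
  (forall x, 0 < a x -> a x * Derive f x + H x (f x) = lam) ->
  (forall x y, Rabs (u x - u y) <= L * Rabs (x - y)) ->
  visc_super a H lam0 u -> visc_sub a H lam0 u ->
  (forall x, 0 < a x -> f x <= Derive u x) ->
  filterlim f (near_in_A a x0) (locally (pminus H lam x0)).
Proof.
  intros Ha HH Hlam Hx0 Hf1 [M HM] Hfeq HL Hsup Hsub Hle.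
  assert (Hmin := min_H_le_lambda0 kappa alpha0 alpha1 gamma eta a H phat Ha HH lam0 u L HL Hsup x0 Hx0).
  assert (Hg := H_sqc_sharp alpha0 alpha1 gamma eta H phat HH x0).
  change (pminus H lam x0) with (sublevel_inf (H x0) lam).
  rewrite (sublevel_inf_opp (H x0) (phat x0) eta Hg lam) by lra.
  apply filterlim_reflect.
  replace (sublevel_sup (fun p => H x0 (- p)) lam)
    with (pplus (fun x p => H (- x) (- p)) lam (- x0)) by (unfold pplus; rewrite Ropp_involutive; auto).
  apply (above_solution_limit kappa alpha0 alpha1 gamma eta _ _ (fun x => - phat (- x)) lam0 lam
    (- x0) (fun x => - f (- x)) (fun x => u (- x)) L).
  - apply a_assump_reflect; auto.
  - apply H_sqc_reflect; auto.
  - auto.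
  - rewrite Ropp_involutive; auto.
  - intros x Hx. apply (ex_derive_opp (fun x => f (- x))), ex_derive_comp_opp, Hf1, Hx.
  - exists M. intros x Hx. rewrite Rabs_Ropp. auto.
  - intros x Hx. rewrite Derive_opp, Derive_comp_opp by auto. rewrite !Ropp_involutive. auto.
  - intros x y. replace (x - y) with (- (- x - - y)) by ring. rewrite Rabs_Ropp. auto.
  - apply visc_super_reflect; auto.
  - apply visc_sub_reflect; auto.
  - intros x Hx.
    destruct (visc_sol_regular kappa alpha0 alpha1 gamma eta a H phat Ha HH lam0 u L HL Hsup Hsub
      (- x) Hx) as [K [r [_ [_ [Hd _]]]]].
    rewrite Derive_comp_opp by (eexists; eauto). specialize (Hle (- x) Hx). lra.
Qed.

Theorem mainTheorem10
  (kappa alpha0 alpha1 gamma eta : R) (a : R -> R) (H : R -> R -> R) (phat : R -> R)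
  (Ha : a_assump kappa a) (HA1 : A1' a)
  (HH : H_sqc alpha0 alpha1 gamma eta H phat)
  (lam0 : R) (Hlam0 : lambda0 a H = Finite lam0)
  (x0 : R) (Hx0 : a x0 = 0)
  (Hacc : forall eps, 0 < eps -> exists y, 0 < a y /\ Rabs (y - x0) < eps)
  (lam : R) (Hlam : lam > lam0)
  (f : R -> R)
  (Hf1 : forall x, 0 < a x -> ex_derive f x /\ continuous (Derive f) x)
  (Hfb : exists M, forall x, 0 < a x -> Rabs (f x) <= M)
  (Hfeq : forall x, 0 < a x -> a x * Derive f x + H x (f x) = lam)
  (u : R -> R) (Hul : lipschitz u) (Hu : visc_sol a H lam0 u) :
  lamhat H x0 <= lam0 /\
  ((forall x, 0 < a x -> f x >= Derive u x) ->
     filterlim f (near_in_A a x0) (locally (pplus H lam x0)) /\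
     pplus H lam x0 > pplus H lam0 x0 /\ pplus H lam0 x0 >= phat x0) /\
  ((forall x, 0 < a x -> f x <= Derive u x) ->
     filterlim f (near_in_A a x0) (locally (pminus H lam x0)) /\
     pminus H lam x0 < pminus H lam0 x0 /\ pminus H lam0 x0 <= phat x0).
Proof.
  destruct Hul as [L HL]. destruct Hu as [Hsup Hsub].
  assert (Hdf : forall x, 0 < a x -> ex_derive f x) by (intros x Hx; apply Hf1, Hx).
  assert (Hg := H_sqc_sharp alpha0 alpha1 gamma eta H phat HH x0).
  assert (Hmin := min_H_le_lambda0 kappa alpha0 alpha1 gamma eta a H phat Ha HH lam0 u L HL Hsup x0 Hx0).
  split; [|split]; [| intros Hge; split; [|split] | intros Hle; split; [|split]].
  - unfold lamhat. rewrite (min_value_eq (H x0) (phat x0) eta Hg). exact Hmin.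
  - exact (above_solution_limit kappa alpha0 alpha1 gamma eta a H phat lam0 lam x0 f u L
      Ha HH Hlam Hx0 Hdf Hfb Hfeq HL Hsup Hsub Hge).
  - exact (sublevel_sup_lt (H x0) (phat x0) eta Hg lam0 lam Hlam Hmin).
  - apply Rle_ge, (sublevel_sup_bounds (H x0) (phat x0) eta Hg lam0 Hmin).
  - exact (below_solution_limit kappa alpha0 alpha1 gamma eta a H phat lam0 lam x0 f u L
      Ha HH Hlam Hx0 Hdf Hfb Hfeq HL Hsup Hsub Hle).
  - exact (sublevel_inf_lt (H x0) (phat x0) eta Hg lam0 lam Hlam Hmin).
  - exact (sublevel_inf_le_min (H x0) (phat x0) eta Hg lam0 Hmin).
Qed.
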